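(* Let $k\ge3$ and $d\in[d_{\mathrm{lbd}}(k),d_{\mathrm{ubd}}(k)]$. Then the equation $\Psi_d(x)=x$ has a unique root $x=x(k,d)$ in $[\frac12-\frac1{2^k},\frac12]$, so $\Phi^\star(d):=\Phi_k(d,x(k,d))$ is well defined. Furthermore, $d\mapsto \Phi^\star(d)$ is continuous on $[d_{\mathrm{lbd}}(k),d_{\mathrm{ubd}}(k)]$, with $\Phi^\star(d_{\mathrm{lbd}}(k))>0$ and $\Phi^\star(d_{\mathrm{ubd}}(k))<0$.
   Context: For real $d$ and $k\ge3$: $\hat\Psi(x)=\frac{1-2x^{k-1}}{1-x^{k-1}}$, $\dot\Psi(v)=\frac{1-v^{d-1}}{2-v^{d-1}}$, $\Psi_d=\dot\Psi\circ\hat\Psi$. $\Phi_k(d,x)=-\log(1-x)-d(1-k^{-1}-d^{-1})\log(1-2x^k)+(d-1)\log(1-x^{k-1})$. The constants: $d_{\mathrm{lbd}}(3)=6.74$, $d_{\mathrm{lbd}}(4)=16.7$, $d_{\mathrm{lbd}}(k)=(2^{k-1}-2)k\log2$ for $k\ge5$; $d_{\mathrm{ubd}}(3)=7.5$, $d_{\mathrm{ubd}}(k)=2^{k-1}k\log2$ for $k\ge4$. *)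

From Stdlib Require Import Reals.
Open Scope R_scope.

Definition Psi_hat (k : nat) (x : R) : R :=
  (1 - 2 * x ^ (k - 1)) / (1 - x ^ (k - 1)).

(* \dot\Psi(v) = (1 - v^{d-1}) / (2 - v^{d-1}),  real exponent d-1
   (v^{d-1} := exp((d-1) ln v), used for v > 0) *)
Definition Psi_dot (d v : R) : R :=
  (1 - Rpower v (d - 1)) / (2 - Rpower v (d - 1)).

Definition Psi (k : nat) (d x : R) : R := Psi_dot d (Psi_hat k x).

Definition Phi (k : nat) (d x : R) : R :=
  - ln (1 - x)
  - d * (1 - / INR k - / d) * ln (1 - 2 * x ^ k)
  + (d - 1) * ln (1 - x ^ (k - 1)).

Definition d_lbd (k : nat) : R :=
  match k with
  | 3%nat => 674 / 100
  | 4%nat => 167 / 10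
  | _ => (2 ^ (k - 1) - 2) * INR k * ln 2
  end.

Definition d_ubd (k : nat) : R :=
  match k with
  | 3%nat => 75 / 10
  | _ => 2 ^ (k - 1) * INR k * ln 2
  end.

Definition in_root_interval (k : nat) (x : R) : Prop :=
  1 / 2 - 1 / 2 ^ k <= x <= 1 / 2.

Definition in_d_interval (k : nat) (d : R) : Prop :=
  d_lbd k <= d <= d_ubd k.

From Stdlib Require Import Reals Lra Lia Psatz Ranalysis5.
From Coquelicot Require Import Coquelicot.
Open Scope R_scope.

(* Write v = Psi_hat k x and W = v^(d-1), so that Psi k d x = (1 - W)/(2 - W);
   as 0 < v < 1, Psi k d x is nondecreasing in d.  Let a = 1/2 - 2^-k.  Everything
   follows from three facts: Psi k d_lbd a > a; x |-> Psi k d x - x is strictly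
   decreasing on [a, 1/2] for every admissible d; and for d = d_lbd, d_ubd there is
   a subsolution x0 <= Psi k d x0 beyond which Phi k d has the required sign.
   The intermediate value theorem and strict decrease give the unique root; strict
   decrease turns continuity of Psi in d into continuity of the root, and Phi is
   affine in d; a subsolution lies below the root, which transfers the sign of Phi.
   For k >= 6 the three facts follow from expansions in e = 2^-k, since
   x^(k-1) is of order e on [a, 1/2]; for k = 3, 4, 5 they are checked by rational
   interval arithmetic, with ln enclosed by its atanh series and monotonicity
   established piece by piece on a subdivision. *)

Lemma le_of_derive_nonneg (g dg : R -> R) (a b : R) : a <= b ->
  (forall x, a <= x <= b -> is_derive g x (dg x)) ->
  (forall x, a <= x <= b -> 0 <= dg x) -> g a <= g b.
Proof.
  intros Hab Hd Hp.
  destruct (MVT_gen g a b dg) as [c [Hc Heq]];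
    rewrite ?Rmin_left, ?Rmax_right in * by lra.
  - intros x Hx. apply Hd. lra.
  - intros x Hx. apply derivable_continuous_pt. exists (dg x).
    apply is_derive_Reals, Hd. lra.
  - assert (0 <= dg c) by (apply Hp; lra). nra.
Qed.

Lemma exp_le_exp (x y : R) : x <= y -> exp x <= exp y.
Proof.
  intros H. destruct (Req_dec x y) as [->|]; [lra|].
  left. apply exp_increasing. lra.
Qed.

Lemma ln_le_ln (a b : R) : 0 < a -> a <= b -> ln a <= ln b.
Proof.
  intros Ha Hab. destruct (Req_dec a b) as [->|]; [lra|].
  left. apply ln_increasing; lra.
Qed.

Lemma ln_le_sub1 (y : R) : 0 < y -> ln y <= y - 1.
Proof. intros Hy. pose proof (exp_ineq1_le (ln y)) as H. rewrite exp_ln in H; lra. Qed.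

Lemma ln_ge_1_sub_inv (y : R) : 0 < y -> 1 - / y <= ln y.
Proof.
  intros Hy. pose proof (ln_le_sub1 (/ y) (Rinv_0_lt_compat _ Hy)) as H.
  rewrite ln_Rinv in H by lra. lra.
Qed.

Lemma ln_sub_ln_ge (A B : R) : 0 < A -> 0 < B -> (A - B) / A <= ln A - ln B.
Proof.
  intros HA HB. pose proof (ln_ge_1_sub_inv (A / B) ltac:(apply Rdiv_lt_0_compat; lra)) as H.
  unfold Rdiv in H. rewrite ln_mult, ln_Rinv in H by (try apply Rinv_0_lt_compat; lra).
  replace (1 - / (A * / B)) with ((A - B) / A) in H by (field; lra). lra.
Qed.

(* Partial sums of ln ((1 + s)/(1 - s)) = 2 (s + s^3/3 + s^5/5 + ...), and a tail bound. *)
Definition ln_series_lb (s : R) : R := 2 * (s + s^3/3 + s^5/5 + s^7/7).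
Definition ln_series_ub (s : R) : R := ln_series_lb s + 2 * s^9 / (9 * (1 - s^2)).

Lemma ln_series_bounds (y : R) : 1 <= y ->
  ln_series_lb ((y - 1)/(y + 1)) <= ln y <= ln_series_ub ((y - 1)/(y + 1)).
Proof.
  intros Hy. set (s := (y - 1)/(y + 1)).
  assert (Hs : 0 <= s < 1).
  { unfold s. split; [apply Rdiv_le_0_compat; lra|].
    apply (Rmult_lt_reg_r (y + 1)); [lra|]. field_simplify; lra. }
  assert (E : ln y = ln (1 + s) - ln (1 - s)).
  { replace y with ((1 + s) * / (1 - s)) at 1 by (unfold s; field; lra).
    rewrite ln_mult, ln_Rinv by (try apply Rinv_0_lt_compat; lra). ring. }
  rewrite E.
  split.
  - set (g := fun u => ln (1 + u) - ln (1 - u) - ln_series_lb u).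
    enough (g 0 <= g s) by (unfold g, ln_series_lb in *;
      rewrite Rplus_0_r, Rminus_0_r, ln_1 in *; lra).
    apply (le_of_derive_nonneg g (fun u => 2 * u^8 / (1 - u^2))); [lra| |].
    + intros u Hu. unfold g, ln_series_lb. auto_derive; [repeat split; lra|].
      field. repeat split; try lra. nra.
    + intros u Hu. apply Rdiv_le_0_compat; [apply Rmult_le_pos, pow_le|]; nra.
  - set (g := fun u => ln_series_ub u - (ln (1 + u) - ln (1 - u))).
    enough (g 0 <= g s) by (unfold g, ln_series_ub, ln_series_lb in *;
      rewrite Rplus_0_r, Rminus_0_r, ln_1 in *; lra).
    apply (le_of_derive_nonneg g (fun u => 4/9 * u^10 / (1 - u^2)^2)); [lra| |].
    + intros u Hu. unfold g, ln_series_ub, ln_series_lb.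
      auto_derive; [repeat split; try lra; nra|].
      field. repeat split; try lra. nra.
    + intros u Hu. apply Rdiv_le_0_compat; [apply Rmult_le_pos, pow_le|]; try lra.
      apply pow_lt. nra.
Qed.

Lemma ln2_bounds : 0.693147 < ln 2 < 0.6931472.
Proof.
  replace 2 with (4/3 * (3/2)) by field. rewrite ln_mult by lra.
  pose proof (ln_series_bounds (4/3) ltac:(lra)).
  pose proof (ln_series_bounds (3/2) ltac:(lra)).
  unfold ln_series_ub, ln_series_lb in *. lra.
Qed.

Lemma ln_one_sub_le (a : R) : 0 <= a < 1 -> ln (1 - a) <= - a - a^2/2.
Proof.
  intros Ha. set (g := fun u => - u - u^2/2 - ln (1 - u)).
  enough (g 0 <= g a) by (unfold g in *; rewrite Rminus_0_r, ln_1 in *; lra).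
  apply (le_of_derive_nonneg g (fun u => u^2 / (1 - u))); [lra| |].
  - intros u Hu. unfold g. auto_derive; [lra|]. field. lra.
  - intros u Hu. apply Rdiv_le_0_compat; [apply pow2_ge_0|lra].
Qed.

Lemma ln_one_sub_ge (a : R) : 0 <= a < 1 -> - a - a^2/2 - a^3/(3*(1 - a)) <= ln (1 - a).
Proof.
  intros Ha. set (g := fun u => ln (1 - u) + u + u^2/2 + u^3/(3*(1 - u))).
  enough (g 0 <= g a) by (unfold g in *; rewrite Rminus_0_r, ln_1 in *; lra).
  apply (le_of_derive_nonneg g (fun u => u^3 / (3*(1 - u)^2))); [lra| |].
  - intros u Hu. unfold g. auto_derive; [lra|]. field. lra.
  - intros u Hu. apply Rdiv_le_0_compat; [apply pow_le; lra|nra].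
Qed.

Lemma exp_ge_of_derive (p dp : R -> R) : p 0 = 1 ->
  (forall u, is_derive p u (dp u)) -> (forall u, 0 <= u -> dp u <= exp u) ->
  forall z, 0 <= z -> p z <= exp z.
Proof.
  intros H0 Hd Hdp z Hz.
  enough (exp 0 - p 0 <= exp z - p z) by (rewrite exp_0, H0 in *; lra).
  apply (le_of_derive_nonneg (fun u => exp u - p u) (fun u => exp u - dp u)); [lra| |].
  - intros u _. exact (is_derive_minus _ _ u _ _ (is_derive_exp u) (Hd u)).
  - intros u Hu. specialize (Hdp u (proj1 Hu)). lra.
Qed.

Lemma exp_ge_taylor4 (z : R) : 0 <= z -> 1 + z + z^2/2 + z^3/6 + z^4/24 <= exp z.
Proof.
  revert z.
  assert (T2 : forall u, 0 <= u -> 1 + u <= exp u) by (intros; apply exp_ineq1_le).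
  assert (T3 : forall u, 0 <= u -> 1 + u + u^2/2 <= exp u).
  { apply (exp_ge_of_derive _ (fun u => 1 + u)); [lra| |exact T2].
    intros u. auto_derive; [easy|field]. }
  assert (T4 : forall u, 0 <= u -> 1 + u + u^2/2 + u^3/6 <= exp u).
  { apply (exp_ge_of_derive _ (fun u => 1 + u + u^2/2)); [lra| |exact T3].
    intros u. auto_derive; [easy|field]. }
  apply (exp_ge_of_derive _ (fun u => 1 + u + u^2/2 + u^3/6)); [lra| |exact T4].
  intros u. auto_derive; [easy|field].
Qed.

Lemma mul_exp_neg_antitone (z0 z : R) : 1 <= z0 <= z -> z * exp (- z) <= z0 * exp (- z0).
Proof.
  intros Hz.
  replace (exp (- z0)) with (exp (- z) * exp (z - z0)) by (rewrite <- exp_plus; f_equal; ring).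
  pose proof (exp_ineq1_le (z - z0)). pose proof (exp_pos (- z)).
  assert (z <= z0 * (1 + (z - z0))) by nra.
  assert (z0 * (1 + (z - z0)) <= z0 * exp (z - z0)) by (apply Rmult_le_compat_l; lra).
  nra.
Qed.

Lemma exp_neg_le_of_taylor4 (M W : R) : 0 <= M ->
  1 <= W * (1 + M/4 + (M/4)^2/2 + (M/4)^3/6 + (M/4)^4/24)^4 -> exp (- M) <= W.
Proof.
  intros HM HW. pose proof (exp_ge_taylor4 (M/4) ltac:(lra)) as He.
  set (P := 1 + M/4 + (M/4)^2/2 + (M/4)^3/6 + (M/4)^4/24) in *.
  assert (HP : 1 <= P).
  { unfold P. pose proof (pow_le (M/4) 2). pose proof (pow_le (M/4) 3).
    pose proof (pow_le (M/4) 4). lra. }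
  assert (HPe : P^4 <= exp M).
  { replace (exp M) with (exp (M/4) ^ 4)
      by (simpl; rewrite Rmult_1_r, <- !exp_plus; f_equal; field).
    apply pow_incr. lra. }
  assert (0 < P^4) by (apply pow_lt; lra).
  assert (0 <= W) by nra.
  rewrite exp_Ropp. apply (Rmult_le_reg_r (exp M)); [apply exp_pos|].
  rewrite Rinv_l by (apply Rgt_not_eq, exp_pos). nra.
Qed.

Lemma pow_le_one (x : R) (n : nat) : 0 <= x <= 1 -> x^n <= 1.
Proof.
  intros Hx. induction n as [|n IH]; simpl; [lra|].
  assert (0 <= x^n) by (apply pow_le; lra). nra.
Qed.

Lemma one_sub_pow_ge (z : R) (n : nat) : 0 <= z <= 1 -> 1 - INR n * z <= (1 - z)^n.
Proof.
  intros Hz. induction n as [|n IH]; [simpl; lra|].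
  rewrite S_INR. simpl.
  assert (0 <= (1 - z)^n) by (apply pow_le; lra).
  pose proof (pos_INR n). nra.
Qed.

Lemma one_sub_pow_le (z : R) (n : nat) : 0 <= z <= 1 ->
  (1 - z)^n <= 1 - INR n * z + INR n * (INR n - 1) / 2 * z^2.
Proof.
  intros Hz. induction n as [|n IH]; [simpl; lra|].
  rewrite S_INR. simpl. pose proof (pos_INR n).
  assert (0 <= INR n * (INR n - 1) * z^3).
  { destruct n; [simpl; lra|]. rewrite S_INR. pose proof (pos_INR n).
    apply Rmult_le_pos; [nra|apply pow_le; lra]. }
  apply Rle_trans with ((1 - z) * (1 - INR n * z + INR n * (INR n - 1) / 2 * z^2)).
  - apply Rmult_le_compat_l; lra.
  - simpl in *. nra.
Qed.

Lemma pow_sub_le (x y : R) (n : nat) : 0 <= x <= y ->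
  y^(S n) - x^(S n) <= INR (S n) * y^n * (y - x).
Proof.
  intros Hxy. induction n as [|n IH]; [simpl; lra|].
  rewrite S_INR.
  replace (y^S (S n) - x^S (S n)) with (y * (y^S n - x^S n) + x^S n * (y - x)) by (simpl; ring).
  assert (x^S n <= y^S n) by (apply pow_incr; lra).
  assert (y * (y^S n - x^S n) <= y * (INR (S n) * y^n * (y - x))) by (apply Rmult_le_compat_l; lra).
  simpl in *. nra.
Qed.

Lemma pow_sub_ge (x y : R) (n : nat) : 0 <= x <= y ->
  INR (S n) * x^n * (y - x) <= y^(S n) - x^(S n).
Proof.
  intros Hxy. induction n as [|n IH]; [simpl; lra|].
  rewrite S_INR.
  replace (y^S (S n) - x^S (S n)) with (x * (y^S n - x^S n) + y^S n * (y - x)) by (simpl; ring).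
  assert (x^S n <= y^S n) by (apply pow_incr; lra).
  assert (x * (INR (S n) * x^n * (y - x)) <= x * (y^S n - x^S n)) by (apply Rmult_le_compat_l; lra).
  simpl in *. nra.
Qed.

Lemma pow_pred_sub_le (k : nat) (x y z : R) : (2 <= k)%nat -> 0 <= x <= y -> y <= z ->
  y^(k-1) - x^(k-1) <= (INR k - 1) * z^(k-2) * (y - x).
Proof.
  intros Hk Hxy Hyz.
  replace (k - 1)%nat with (S (k - 2)) by lia.
  pose proof (pow_sub_le x y (k - 2) Hxy) as H.
  rewrite S_INR, minus_INR in H by lia. change (INR 2) with 2 in H.
  assert (y^(k-2) <= z^(k-2)) by (apply pow_incr; lra).
  assert (INR 2 <= INR k) by (apply le_INR; lia). change (INR 2) with 2 in *.
  assert ((INR k - 1) * y^(k-2) * (y - x) <= (INR k - 1) * z^(k-2) * (y - x)).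
  { apply Rmult_le_compat_r; [lra|]. apply Rmult_le_compat_l; lra. }
  replace (INR k - 2 + 1) with (INR k - 1) in H by ring. lra.
Qed.

Definition strictly_decreasing_on (f : R -> R) (a b : R) : Prop :=
  forall x y, a <= x -> x < y -> y <= b -> f y < f x.

Definition strictly_increasing_on (f : R -> R) (a b : R) : Prop :=
  forall x y, a <= x -> x < y -> y <= b -> f x < f y.

Lemma strictly_decreasing_on_cat (f : R -> R) (a b c : R) :
  strictly_decreasing_on f a b -> strictly_decreasing_on f b c ->
  strictly_decreasing_on f a c.
Proof.
  intros H1 H2 x y Hx Hxy Hy.
  destruct (Rle_or_lt y b); [apply H1; lra|].
  destruct (Rle_or_lt b x); [apply H2; lra|].
  assert (f b < f x) by (apply H1; lra). assert (f y < f b) by (apply H2; lra). lra.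
Qed.

Lemma strictly_increasing_on_cat (f : R -> R) (a b c : R) :
  strictly_increasing_on f a b -> strictly_increasing_on f b c ->
  strictly_increasing_on f a c.
Proof.
  intros H1 H2 x y Hx Hxy Hy.
  destruct (Rle_or_lt y b); [apply H1; lra|].
  destruct (Rle_or_lt b x); [apply H2; lra|].
  assert (f x < f b) by (apply H1; lra). assert (f b < f y) by (apply H2; lra). lra.
Qed.

Definition root_lo (k : nat) : R := 1/2 - 1/2^k.

Lemma in_root_interval_bounds (k : nat) (x : R) :
  in_root_interval k x -> root_lo k <= x <= 1/2.
Proof. exact (fun H => H). Qed.

Lemma root_lo_bounds (k : nat) : (3 <= k)%nat -> 3/8 <= root_lo k < 1/2.
Proof.
  intros Hk. unfold root_lo.
  assert (8 <= 2^k).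
  { replace k with (3 + (k - 3))%nat by lia. rewrite pow_add.
    assert (1 <= 2^(k-3)) by (apply pow_R1_Rle; lra). simpl. nra. }
  assert (1/2^k <= 1/8) by (apply Rmult_le_compat_l, Rinv_le_contravar; lra).
  assert (0 < 1/2^k) by (apply Rdiv_lt_0_compat; lra). lra.
Qed.

Section PsiFacts.
Variable k : nat.
Hypothesis hk : (3 <= k)%nat.

Lemma pow_pred_bounds (x : R) : 0 < x <= 1/2 -> 0 < x^(k-1) <= 1/4.
Proof.
  intros Hx. split; [apply pow_lt; lra|].
  replace (k - 1)%nat with (2 + (k - 3))%nat by lia. rewrite pow_add.
  assert (x^(k-3) <= 1) by (apply pow_le_one; lra).
  assert (0 <= x^(k-3)) by (apply pow_le; lra).
  simpl. nra.
Qed.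

Lemma pow_k_bounds (x : R) : 0 < x <= 1/2 -> 0 < x^k <= 1/8.
Proof.
  intros Hx. pose proof (pow_pred_bounds x Hx).
  replace k with (S (k - 1)) by lia. simpl. nra.
Qed.

Lemma pow_succ_pred (x : R) : x^k = x * x^(k-1).
Proof. replace k with (S (k - 1)) at 1 by lia. reflexivity. Qed.

Lemma Psi_hat_bounds (x : R) : 0 < x <= 1/2 -> 0 < Psi_hat k x < 1.
Proof.
  intros Hx. pose proof (pow_pred_bounds x Hx). unfold Psi_hat.
  split; [apply Rdiv_lt_0_compat; lra|].
  apply (Rmult_lt_reg_r (1 - x^(k-1))); [lra|]. field_simplify; lra.
Qed.

Lemma ln_Psi_hat_neg (x : R) : 0 < x <= 1/2 -> ln (Psi_hat k x) < 0.
Proof.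
  intros Hx. pose proof (Psi_hat_bounds x Hx). rewrite <- ln_1.
  apply ln_increasing; lra.
Qed.

Lemma Psi_hat_antitone (x y : R) : 0 < x <= y -> y <= 1/2 -> Psi_hat k y <= Psi_hat k x.
Proof.
  intros Hxy Hy.
  pose proof (pow_pred_bounds x ltac:(lra)). pose proof (pow_pred_bounds y ltac:(lra)).
  assert (x^(k-1) <= y^(k-1)) by (apply pow_incr; lra).
  unfold Psi_hat.
  replace ((1 - 2 * y^(k-1)) / (1 - y^(k-1))) with (2 - / (1 - y^(k-1))) by (field; lra).
  replace ((1 - 2 * x^(k-1)) / (1 - x^(k-1))) with (2 - / (1 - x^(k-1))) by (field; lra).
  assert (/ (1 - x^(k-1)) <= / (1 - y^(k-1))) by (apply Rinv_le_contravar; lra). lra.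
Qed.

Definition Psi_pow (d x : R) : R := Rpower (Psi_hat k x) (d - 1).

Lemma Psi_pow_pos (d x : R) : 0 < Psi_pow d x.
Proof. apply exp_pos. Qed.

Lemma Psi_pow_antitone_d (d1 d2 x : R) : 0 < x <= 1/2 -> d1 <= d2 ->
  Psi_pow d2 x <= Psi_pow d1 x.
Proof.
  intros Hx Hd. pose proof (ln_Psi_hat_neg x Hx).
  apply exp_le_exp. nra.
Qed.

Lemma Psi_pow_le_one (d x : R) : 0 < x <= 1/2 -> 1 <= d -> Psi_pow d x <= 1.
Proof.
  intros Hx Hd. pose proof (Psi_pow_antitone_d 1 d x Hx Hd).
  unfold Psi_pow, Rpower in *. rewrite Rminus_diag, Rmult_0_l, exp_0 in *. lra.
Qed.

Lemma Psi_eq (d x : R) : Psi k d x = (1 - Psi_pow d x) / (2 - Psi_pow d x).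
Proof. reflexivity. Qed.

Lemma Psi_monotone_d (d1 d2 x : R) : 0 < x <= 1/2 -> 1 <= d1 -> d1 <= d2 ->
  Psi k d1 x <= Psi k d2 x.
Proof.
  intros Hx Hd1 Hd. rewrite !Psi_eq.
  pose proof (Psi_pow_antitone_d d1 d2 x Hx Hd).
  pose proof (Psi_pow_le_one d1 x Hx Hd1).
  replace ((1 - Psi_pow d1 x) / (2 - Psi_pow d1 x)) with (1 - / (2 - Psi_pow d1 x)) by (field; lra).
  replace ((1 - Psi_pow d2 x) / (2 - Psi_pow d2 x)) with (1 - / (2 - Psi_pow d2 x)) by (field; lra).
  assert (/ (2 - Psi_pow d2 x) <= / (2 - Psi_pow d1 x)) by (apply Rinv_le_contravar; lra). lra.
Qed.

Lemma Psi_half_lt (d : R) : 1 <= d -> Psi k d (1/2) < 1/2.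
Proof.
  intros Hd. rewrite Psi_eq.
  pose proof (Psi_pow_pos d (1/2)). pose proof (Psi_pow_le_one d (1/2) ltac:(lra) Hd).
  apply (Rmult_lt_reg_r (2 - Psi_pow d (1/2))); [lra|]. field_simplify; lra.
Qed.

Lemma lt_Psi_of_Psi_pow (d x y : R) : 0 < x <= 1/2 -> 1 <= d -> y < 1 ->
  Psi_pow d x * (1 - y) < 1 - 2 * y -> y < Psi k d x.
Proof.
  intros Hx Hd Hy H. rewrite Psi_eq.
  pose proof (Psi_pow_le_one d x Hx Hd).
  apply (Rmult_lt_reg_r (2 - Psi_pow d x)); [lra|]. field_simplify; lra.
Qed.

Lemma continuity_pt_of_ex_derive (f : R -> R) (x : R) : ex_derive f x -> continuity_pt f x.
Proof.
  intros [l H]. apply derivable_continuous_pt. exists l. apply is_derive_Reals, H.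
Qed.

Lemma Psi_continuous_x (d x : R) : 0 < x <= 1/2 -> 1 <= d ->
  continuity_pt (fun y => Psi k d y) x.
Proof.
  intros Hx Hd. apply continuity_pt_of_ex_derive.
  pose proof (pow_pred_bounds x Hx). pose proof (Psi_hat_bounds x Hx).
  pose proof (Psi_pow_le_one d x Hx Hd).
  unfold Psi, Psi_dot, Psi_hat, Rpower. unfold Psi_pow, Rpower, Psi_hat in *.
  auto_derive. unfold Rminus, Rdiv in *. repeat split; lra.
Qed.

Lemma Psi_continuous_d (d x : R) : 0 < x <= 1/2 -> 1 <= d ->
  continuity_pt (fun e => Psi k e x) d.
Proof.
  intros Hx Hd. apply continuity_pt_of_ex_derive.
  pose proof (pow_pred_bounds x Hx). pose proof (Psi_hat_bounds x Hx).
  pose proof (Psi_pow_le_one d x Hx Hd).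
  unfold Psi, Psi_dot, Psi_hat, Rpower. unfold Psi_pow, Rpower, Psi_hat in *.
  auto_derive. unfold Rminus, Rdiv in *. repeat split; lra.
Qed.

Definition Phi_intercept (x : R) : R :=
  - ln (1 - x) + ln (1 - 2 * x^k) - ln (1 - x^(k-1)).
Definition Phi_slope (x : R) : R :=
  - (1 - / INR k) * ln (1 - 2 * x^k) + ln (1 - x^(k-1)).

Lemma Phi_affine (d x : R) : d <> 0 -> Phi k d x = Phi_intercept x + d * Phi_slope x.
Proof.
  intros Hd. assert (INR k <> 0) by (apply not_0_INR; lia).
  unfold Phi, Phi_intercept, Phi_slope. field. auto.
Qed.

Lemma Phi_intercept_continuous (x : R) : 0 < x <= 1/2 -> continuity_pt Phi_intercept x.
Proof.
  intros Hx. apply continuity_pt_of_ex_derive.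
  pose proof (pow_pred_bounds x Hx). pose proof (pow_k_bounds x Hx).
  unfold Phi_intercept. auto_derive. repeat split; lra.
Qed.

Lemma Phi_slope_continuous (x : R) : 0 < x <= 1/2 -> continuity_pt Phi_slope x.
Proof.
  intros Hx. apply continuity_pt_of_ex_derive.
  pose proof (pow_pred_bounds x Hx). pose proof (pow_k_bounds x Hx).
  unfold Phi_slope. auto_derive. repeat split; lra.
Qed.

Lemma Phi_eq (d x : R) : d <> 0 ->
  Phi k d x = - ln (1 - x) - (d * (1 - / INR k) - 1) * ln (1 - 2 * x^k)
              + (d - 1) * ln (1 - x^(k-1)).
Proof.
  intros Hd. assert (INR k <> 0) by (apply not_0_INR; lia).
  unfold Phi. replace (d * (1 - / INR k - / d)) with (d * (1 - / INR k) - 1) by (field; auto).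
  ring.
Qed.

Lemma ln_Psi_hat_le (x : R) : 0 < x <= 1/2 -> ln (Psi_hat k x) <= - x^(k-1).
Proof.
  intros Hx. pose proof (pow_pred_bounds x Hx). pose proof (Psi_hat_bounds x Hx) as Hv.
  pose proof (ln_le_sub1 _ (proj1 Hv)).
  assert (Psi_hat k x - 1 <= - x^(k-1)); [|lra].
  unfold Psi_hat. set (t := x^(k-1)) in *.
  replace ((1 - 2*t)/(1 - t) - 1) with (- (t/(1 - t))) by (field; lra).
  apply Ropp_le_contravar. apply (Rmult_le_reg_r (1 - t)); [lra|]. field_simplify; nra.
Qed.

Lemma lt_Psi_of_ln_bound (d x y M : R) : 0 < x <= 1/2 -> 1 <= d -> y < 1/2 ->
  (d - 1) * ln (Psi_hat k x) <= M -> M < ln ((1 - 2*y)/(1 - y)) -> y < Psi k d x.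
Proof.
  intros Hx Hd Hy HM HMy. apply lt_Psi_of_Psi_pow; auto; [lra|].
  assert (HW : Psi_pow d x < (1 - 2*y)/(1 - y)).
  { unfold Psi_pow, Rpower.
    rewrite <- (exp_ln ((1 - 2*y)/(1 - y))) by (apply Rdiv_lt_0_compat; lra).
    apply exp_increasing. lra. }
  apply (Rmult_lt_compat_r (1 - y)) in HW; [|lra].
  replace ((1 - 2*y)/(1 - y) * (1 - y)) with (1 - 2*y) in HW by (field; lra). exact HW.
Qed.

(* ln a - ln b <= (a - b)/b and exp z >= 1 + z linearise the two nonlinear steps. *)
Lemma Psi_sub_le (d x y : R) : 1 <= d -> 0 < x -> x < y -> y <= 1/2 ->
  Psi k d y - Psi k d x <=
  (d - 1) * Psi_pow d x * (y^(k-1) - x^(k-1)) /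
    ((1 - x^(k-1)) * (1 - y^(k-1)) * Psi_hat k y * ((2 - Psi_pow d x) * (2 - Psi_pow d y))).
Proof.
  intros Hd Hx Hxy Hy.
  pose proof (pow_pred_bounds x ltac:(lra)). pose proof (pow_pred_bounds y ltac:(lra)).
  pose proof (Psi_hat_bounds x ltac:(lra)). pose proof (Psi_hat_bounds y ltac:(lra)).
  pose proof (Psi_pow_le_one d x ltac:(lra) Hd). pose proof (Psi_pow_le_one d y ltac:(lra) Hd).
  pose proof (Psi_pow_pos d x). pose proof (Psi_pow_pos d y).
  set (tx := x^(k-1)) in *. set (ty := y^(k-1)) in *.
  set (wx := Psi_pow d x) in *. set (wy := Psi_pow d y) in *.
  set (vx := Psi_hat k x) in *. set (vy := Psi_hat k y) in *.
  assert (Hw : wy >= wx * (1 + (d - 1) * (ln vy - ln vx))).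
  { unfold wy, wx, Psi_pow, Rpower. fold vx vy.
    replace ((d - 1) * ln vy) with ((d - 1) * ln vx + (d - 1) * (ln vy - ln vx)) by ring.
    rewrite exp_plus. pose proof (exp_ineq1_le ((d - 1) * (ln vy - ln vx))).
    pose proof (exp_pos ((d - 1) * ln vx)). nra. }
  assert (Hl : ln vx - ln vy <= (vx - vy) / vy).
  { pose proof (ln_sub_ln_ge vy vx ltac:(lra) ltac:(lra)) as Hyx.
    replace ((vy - vx)/vy) with (- ((vx - vy)/vy)) in Hyx by (field; lra). lra. }
  assert (Hv : vx - vy = (ty - tx) / ((1 - tx) * (1 - ty))).
  { unfold vx, vy, Psi_hat. fold tx ty. field. split; lra. }
  assert (HP : Psi k d y - Psi k d x = (wx - wy) / ((2 - wx) * (2 - wy))).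
  { rewrite !Psi_eq. fold wx wy. field. split; lra. }
  rewrite HP.
  assert (Hwd : wx - wy <= (d - 1) * wx * ((ty - tx) / ((1 - tx) * (1 - ty))) / vy).
  { rewrite <- Hv. assert (0 <= (d - 1) * wx) by nra.
    assert ((d - 1)*wx*(ln vx - ln vy) <= (d - 1)*wx*((vx - vy)/vy))
      by (apply Rmult_le_compat_l; lra).
    replace ((d - 1)*wx*(vx - vy)/vy) with ((d - 1)*wx*((vx - vy)/vy)) by (field; lra).
    nra. }
  apply Rle_trans with (((d - 1) * wx * ((ty - tx) / ((1 - tx) * (1 - ty))) / vy)
                        / ((2 - wx) * (2 - wy))).
  - apply Rmult_le_compat_r; [left; apply Rinv_0_lt_compat; nra|exact Hwd].
  - right. field. repeat split; lra.
Qed.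

Lemma gap_decreasing_of_bounds (d xl xr B Wb : R) : 1 <= d -> 0 < xl -> xr <= 1/2 ->
  (forall x, xl <= x <= xr -> (d - 1) * Psi_pow d x <= B /\ Psi_pow d x <= Wb) -> Wb < 2 ->
  B * (INR k - 1) * xr^(k-2) < (1 - xr^(k-1))^2 * Psi_hat k xr * (2 - Wb)^2 ->
  strictly_decreasing_on (fun x => Psi k d x - x) xl xr.
Proof.
  intros Hd Hxl Hxr HB HWb HC x y Hx Hxy Hy. simpl.
  pose proof (Psi_sub_le d x y Hd ltac:(lra) Hxy ltac:(lra)) as Hc.
  destruct (HB x ltac:(lra)) as [HBx HWx]. destruct (HB y ltac:(lra)) as [_ HWy].
  pose proof (pow_pred_sub_le k x y xr ltac:(lia) ltac:(lra) Hy) as Hdiff.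
  pose proof (pow_pred_bounds x ltac:(lra)). pose proof (pow_pred_bounds y ltac:(lra)).
  pose proof (pow_pred_bounds xr ltac:(lra)).
  assert (x^(k-1) <= y^(k-1)) by (apply pow_incr; lra).
  assert (y^(k-1) <= xr^(k-1)) by (apply pow_incr; lra).
  pose proof (Psi_hat_antitone y xr ltac:(lra) Hxr). pose proof (Psi_hat_bounds xr ltac:(lra)).
  pose proof (Psi_pow_pos d x). pose proof (Psi_pow_pos d y).
  set (N := (d - 1) * Psi_pow d x * (y^(k-1) - x^(k-1))) in Hc.
  set (Dn := (1 - x^(k-1)) * (1 - y^(k-1)) * Psi_hat k y
             * ((2 - Psi_pow d x) * (2 - Psi_pow d y))) in Hc.
  assert (HN : N <= B * ((INR k - 1) * xr^(k-2) * (y - x))).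
  { unfold N. apply Rmult_le_compat; try lra. assert (0 <= d - 1) by lra. nra. }
  assert (HD : (1 - xr^(k-1))^2 * Psi_hat k xr * (2 - Wb)^2 <= Dn).
  { unfold Dn.
    assert ((1 - xr^(k-1))^2 <= (1 - x^(k-1)) * (1 - y^(k-1))) by nra.
    assert ((1 - xr^(k-1))^2 * Psi_hat k xr <= (1 - x^(k-1)) * (1 - y^(k-1)) * Psi_hat k y)
      by (apply Rmult_le_compat; nra).
    apply Rmult_le_compat; nra. }
  assert (HDpos : 0 < (1 - xr^(k-1))^2 * Psi_hat k xr * (2 - Wb)^2).
  { apply Rmult_lt_0_compat; [apply Rmult_lt_0_compat|]; nra. }
  assert (N / Dn < y - x); [|lra].
  apply (Rmult_lt_reg_r Dn); [lra|]. unfold Rdiv. rewrite Rmult_assoc, Rinv_l by lra.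
  assert (B * ((INR k - 1) * xr^(k-2) * (y - x))
          < (1 - xr^(k-1))^2 * Psi_hat k xr * (2 - Wb)^2 * (y - x)).
  { replace (B * ((INR k - 1) * xr^(k-2) * (y - x)))
      with (B * (INR k - 1) * xr^(k-2) * (y - x)) by ring.
    apply Rmult_lt_compat_r; lra. }
  assert ((y - x) * ((1 - xr^(k-1))^2 * Psi_hat k xr * (2 - Wb)^2) <= (y - x) * Dn)
    by (apply Rmult_le_compat_l; lra).
  lra.
Qed.

Lemma ln_one_sub_increment (xl x y : R) : xl <= x -> x < y -> y < 1 ->
  (y - x) / (1 - xl) <= ln (1 - x) - ln (1 - y).
Proof.
  intros Hx Hxy Hy. pose proof (ln_sub_ln_ge (1 - x) (1 - y) ltac:(lra) ltac:(lra)) as H.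
  replace (1 - x - (1 - y)) with (y - x) in H by ring.
  enough ((y - x) / (1 - xl) <= (y - x) / (1 - x)) by lra.
  apply Rmult_le_compat_l; [lra|]. apply Rinv_le_contravar; lra.
Qed.

Lemma ln_one_sub_two_pow_increment (xl x y : R) : 0 < xl <= x -> x < y -> y <= 1/2 ->
  2 * INR k * xl^(k-1) / (1 - 2 * xl^k) * (y - x) <= ln (1 - 2 * x^k) - ln (1 - 2 * y^k).
Proof.
  intros Hx Hxy Hy.
  pose proof (pow_k_bounds x ltac:(lra)). pose proof (pow_k_bounds y ltac:(lra)).
  pose proof (pow_k_bounds xl ltac:(lra)). pose proof (pos_INR k).
  pose proof (ln_sub_ln_ge (1 - 2 * x^k) (1 - 2 * y^k) ltac:(lra) ltac:(lra)) as Hln.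
  assert (Hpk : INR k * x^(k-1) * (y - x) <= y^k - x^k).
  { replace k with (S (k - 1)) at 1 3 4 by lia. apply pow_sub_ge. lra. }
  assert (xl^(k-1) <= x^(k-1)) by (apply pow_incr; lra).
  assert (xl^k <= x^k) by (apply pow_incr; lra).
  assert (0 <= xl^(k-1)) by (apply pow_le; lra).
  apply Rle_trans with (2 * INR k * x^(k-1) * (y - x) / (1 - 2 * x^k)); [|
    apply Rle_trans with ((1 - 2 * x^k - (1 - 2 * y^k)) / (1 - 2 * x^k)); [|exact Hln]].
  - replace (2 * INR k * xl^(k-1) / (1 - 2 * xl^k) * (y - x))
      with (2 * INR k * xl^(k-1) * (y - x) / (1 - 2 * xl^k)) by (field; lra).
    apply Rle_trans with (2 * INR k * xl^(k-1) * (y - x) / (1 - 2 * x^k)).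
    + apply Rmult_le_compat_l; [repeat apply Rmult_le_pos; lra|].
      apply Rinv_le_contravar; lra.
    + apply Rmult_le_compat_r; [left; apply Rinv_0_lt_compat; lra|].
      apply Rmult_le_compat_r; [lra|]. apply Rmult_le_compat_l; lra.
  - apply Rmult_le_compat_r; [left; apply Rinv_0_lt_compat; lra|]. lra.
Qed.

Lemma ln_one_sub_pow_pred_increment (x y xr : R) : 0 < x -> x < y -> y <= xr -> xr <= 1/2 ->
  - ((INR k - 1) * xr^(k-2) / (1 - xr^(k-1))) * (y - x)
    <= ln (1 - y^(k-1)) - ln (1 - x^(k-1)).
Proof.
  intros Hx Hxy Hy Hxr.
  pose proof (pow_pred_bounds x ltac:(lra)). pose proof (pow_pred_bounds y ltac:(lra)).
  pose proof (pow_pred_bounds xr ltac:(lra)).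
  pose proof (pow_pred_sub_le k x y xr ltac:(lia) ltac:(lra) Hy) as Hdiff.
  assert (y^(k-1) <= xr^(k-1)) by (apply pow_incr; lra).
  assert (x^(k-1) <= y^(k-1)) by (apply pow_incr; lra).
  assert (0 <= xr^(k-2)) by (apply pow_le; lra).
  assert (Hk3 : INR 3 <= INR k) by (apply le_INR; lia). simpl in Hk3.
  pose proof (ln_sub_ln_ge (1 - y^(k-1)) (1 - x^(k-1)) ltac:(lra) ltac:(lra)) as Hln.
  assert ((y^(k-1) - x^(k-1)) / (1 - y^(k-1))
          <= (INR k - 1) * xr^(k-2) * (y - x) / (1 - xr^(k-1))).
  { apply Rle_trans with ((INR k - 1) * xr^(k-2) * (y - x) / (1 - y^(k-1))).
    - apply Rmult_le_compat_r; [left; apply Rinv_0_lt_compat|]; lra.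
    - apply Rmult_le_compat_l; [nra|]. apply Rinv_le_contravar; lra. }
  replace (1 - y^(k-1) - (1 - x^(k-1))) with (- (y^(k-1) - x^(k-1))) in Hln by ring.
  replace (- (y^(k-1) - x^(k-1)) / (1 - y^(k-1)))
    with (- ((y^(k-1) - x^(k-1)) / (1 - y^(k-1)))) in Hln by (field; lra).
  replace (- ((INR k - 1) * xr^(k-2) / (1 - xr^(k-1))) * (y - x))
    with (- ((INR k - 1) * xr^(k-2) * (y - x) / (1 - xr^(k-1)))) by (field; lra).
  lra.
Qed.

Lemma Phi_increasing_of_bounds (d xl xr : R) : 1 <= d -> 0 < xl -> xr <= 1/2 ->
  0 <= d * (1 - / INR k) - 1 ->
  (d - 1) * (INR k - 1) * xr^(k-2) / (1 - xr^(k-1)) <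
    1 / (1 - xl) + (d * (1 - / INR k) - 1) * (2 * INR k * xl^(k-1)) / (1 - 2 * xl^k) ->
  strictly_increasing_on (Phi k d) xl xr.
Proof.
  intros Hd Hxl Hxr HD HC x y Hx Hxy Hy.
  rewrite !Phi_eq by lra.
  set (D' := d * (1 - / INR k) - 1) in *.
  pose proof (ln_one_sub_increment xl x y Hx Hxy ltac:(lra)) as T1.
  pose proof (ln_one_sub_two_pow_increment xl x y ltac:(lra) Hxy ltac:(lra)) as T2.
  pose proof (ln_one_sub_pow_pred_increment x y xr ltac:(lra) Hxy Hy Hxr) as T3.
  apply (Rmult_le_compat_l D') in T2; [|exact HD].
  apply (Rmult_le_compat_l (d - 1)) in T3; [|lra].
  assert (0 < (y - x) * (1 / (1 - xl) + D' * (2 * INR k * xl^(k-1)) / (1 - 2 * xl^k)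
                         - (d - 1) * (INR k - 1) * xr^(k-2) / (1 - xr^(k-1))))
    by (apply Rmult_lt_0_compat; lra).
  pose proof (pow_k_bounds xl ltac:(lra)). pose proof (pow_pred_bounds xr ltac:(lra)).
  replace ((y - x) / (1 - xl)) with ((y - x) * (1 / (1 - xl))) in T1 by (field; lra).
  replace (D' * (2 * INR k * xl^(k-1) / (1 - 2 * xl^k) * (y - x)))
    with ((y - x) * (D' * (2 * INR k * xl^(k-1)) / (1 - 2 * xl^k))) in T2 by (field; lra).
  replace ((d - 1) * (- ((INR k - 1) * xr^(k-2) / (1 - xr^(k-1))) * (y - x)))
    with (- ((y - x) * ((d - 1) * (INR k - 1) * xr^(k-2) / (1 - xr^(k-1))))) in T3 by (field; lra).
  lra.
Qed.

End PsiFacts.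

(** * Reduction to three properties of Psi *)

Definition Psi_gap_decreasing (k : nat) : Prop :=
  forall d, in_d_interval k d ->
    strictly_decreasing_on (fun x => Psi k d x - x) (root_lo k) (1/2).

Definition holds_above_subsolution (k : nat) (d : R) (P : R -> Prop) : Prop :=
  exists x0, root_lo k <= x0 <= 1/2 /\ x0 <= Psi k d x0 /\
    forall x, x0 <= x <= 1/2 -> P x.

Lemma continuity_pt_eps (f : R -> R) (x0 eps : R) : continuity_pt f x0 -> 0 < eps ->
  exists del, 0 < del /\ forall x, Rabs (x - x0) < del -> Rabs (f x - f x0) < eps.
Proof.
  intros H He. destruct (H eps He) as [a [Ha Hx]].
  exists a. split; [lra|]. intros x Hxa.
  destruct (Req_dec x x0) as [->|Hn].
  - rewrite Rminus_diag, Rabs_R0. lra.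
  - apply Hx. repeat split; auto.
Qed.

Lemma limit1_in_ext (f g : R -> R) (D : R -> Prop) (l x0 : R) :
  (forall x, D x -> f x = g x) -> limit1_in f D l x0 -> limit1_in g D l x0.
Proof.
  intros Hfg H eps He. destruct (H eps He) as [a [Ha Hx]].
  exists a. split; [exact Ha|]. intros x [Dx Hdx]. rewrite <- Hfg by exact Dx.
  apply Hx. split; assumption.
Qed.

Lemma limit1_in_comp_continuous (f g : R -> R) (D : R -> Prop) (x0 : R) :
  limit1_in f D (f x0) x0 -> continuity_pt g (f x0) ->
  limit1_in (fun x => g (f x)) D (g (f x0)) x0.
Proof.
  intros Hf Hg eps He.
  destruct (continuity_pt_eps g (f x0) eps Hg He) as [a [Ha Hga]].
  destruct (Hf a Ha) as [b [Hb Hfb]].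
  exists b. split; [exact Hb|]. intros x Hx. apply Hga, Hfb, Hx.
Qed.

Section Reduction.
Variable k : nat.
Hypothesis hk : (3 <= k)%nat.
Hypothesis lbd_ge_1 : 1 <= d_lbd k.
Hypothesis lbd_le_ubd : d_lbd k <= d_ubd k.
Hypothesis root_lo_lt_Psi_lbd : root_lo k < Psi k (d_lbd k) (root_lo k).
Hypothesis gap_decreasing : Psi_gap_decreasing k.

Let root_lo_range := root_lo_bounds k hk.

Lemma in_d_interval_ge_1 (d : R) : in_d_interval k d -> 1 <= d.
Proof. unfold in_d_interval. lra. Qed.

Lemma fixed_point_exists (d : R) : in_d_interval k d ->
  exists x, in_root_interval k x /\ Psi k d x = x.
Proof.
  intros Hd. pose proof (in_d_interval_ge_1 d Hd) as Hd1.
  assert (root_lo k < Psi k d (root_lo k)).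
  { pose proof (Psi_monotone_d k hk (d_lbd k) d (root_lo k) ltac:(lra) lbd_ge_1) as Hmono.
    unfold in_d_interval in Hd. specialize (Hmono ltac:(lra)). lra. }
  destruct (IVT_interv (fun y => y - Psi k d y) (root_lo k) (1/2)) as [z [Hz Hfz]].
  - intros y Hy. apply continuity_pt_minus; [apply continuity_pt_id|].
    apply Psi_continuous_x; auto; lra.
  - lra.
  - lra.
  - pose proof (Psi_half_lt k hk d Hd1). lra.
  - exists z. split; [change (root_lo k <= z <= 1/2)|]; lra.
Qed.

Section FixedPoint.
Variables (d r : R).
Hypothesis Hd : in_d_interval k d.
Hypothesis Hr : in_root_interval k r.
Hypothesis Hfix : Psi k d r = r.

Lemma le_fixed_point (z : R) : root_lo k <= z <= 1/2 -> z <= Psi k d z -> z <= r.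
Proof.
  intros Hz Hpz. apply in_root_interval_bounds in Hr.
  destruct (Rle_or_lt z r) as [|Hlt]; auto.
  pose proof (gap_decreasing d Hd r z ltac:(lra) Hlt ltac:(lra)). simpl in *. lra.
Qed.

Lemma lt_fixed_point (z : R) : root_lo k <= z <= 1/2 -> z < Psi k d z -> z < r.
Proof.
  intros Hz Hpz. pose proof (le_fixed_point z Hz ltac:(lra)).
  destruct (Req_dec z r) as [->|]; lra.
Qed.

Lemma gt_fixed_point (z : R) : root_lo k <= z <= 1/2 -> Psi k d z < z -> r < z.
Proof.
  intros Hz Hpz. apply in_root_interval_bounds in Hr.
  destruct (Rlt_or_le r z) as [|Hle]; auto.
  destruct (Req_dec z r) as [->|]; [lra|].
  pose proof (gap_decreasing d Hd z r ltac:(lra) ltac:(lra) ltac:(lra)). simpl in *. lra.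
Qed.

End FixedPoint.

Lemma fixed_point_unique (d : R) : in_d_interval k d ->
  exists! x, in_root_interval k x /\ Psi k d x = x.
Proof.
  intros Hd. destruct (fixed_point_exists d Hd) as [x [Hx Hpx]].
  exists x. split; [auto|]. intros y [Hy Hpy].
  pose proof Hx as Hx'. pose proof Hy as Hy'.
  apply in_root_interval_bounds in Hx', Hy'.
  pose proof (le_fixed_point d x Hd Hx Hpx y Hy' ltac:(lra)).
  pose proof (le_fixed_point d y Hd Hy Hpy x Hx' ltac:(lra)). lra.
Qed.

Section Continuity.
Variable xs : R -> R.
Hypothesis Hxs : forall d, in_d_interval k d ->
  in_root_interval k (xs d) /\ Psi k d (xs d) = xs d.
Variable d0 : R.
Hypothesis Hd0 : in_d_interval k d0.

(* A point where the gap Psi - id has a strict sign keeps it for nearby d. *)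
Lemma fixed_point_eventually_gt (z : R) : z < xs d0 ->
  exists del, 0 < del /\
    forall d, in_d_interval k d -> Rabs (d - d0) < del -> z < xs d.
Proof.
  intros Hz. destruct (Hxs d0 Hd0) as [Hr0 Hfix0].
  pose proof Hr0 as Hr0'. apply in_root_interval_bounds in Hr0'.
  destruct (Rlt_or_le z (root_lo k)) as [Hlo|Hlo].
  - exists 1. split; [lra|]. intros d Hd _.
    destruct (Hxs d Hd) as [Hr _]. apply in_root_interval_bounds in Hr. lra.
  - pose proof (gap_decreasing d0 Hd0 z (xs d0) Hlo Hz ltac:(lra)) as Hgap. simpl in Hgap.
    destruct (continuity_pt_eps (fun e => Psi k e z) d0 (Psi k d0 z - z)
      (Psi_continuous_d k hk d0 z ltac:(lra) (in_d_interval_ge_1 d0 Hd0)) ltac:(lra))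
      as [del [Hdel Hc]].
    exists del. split; [exact Hdel|]. intros d Hd Hdd.
    destruct (Hxs d Hd) as [Hr Hfix].
    apply (lt_fixed_point d (xs d) Hd Hr Hfix); [lra|].
    specialize (Hc d Hdd). apply Rabs_def2 in Hc. simpl in Hc. lra.
Qed.

Lemma fixed_point_eventually_lt (z : R) : xs d0 < z ->
  exists del, 0 < del /\
    forall d, in_d_interval k d -> Rabs (d - d0) < del -> xs d < z.
Proof.
  intros Hz. destruct (Hxs d0 Hd0) as [Hr0 Hfix0].
  pose proof Hr0 as Hr0'. apply in_root_interval_bounds in Hr0'.
  destruct (Rlt_or_le (1/2) z) as [Hhi|Hhi].
  - exists 1. split; [lra|]. intros d Hd _.
    destruct (Hxs d Hd) as [Hr _]. apply in_root_interval_bounds in Hr. lra.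
  - pose proof (gap_decreasing d0 Hd0 (xs d0) z ltac:(lra) Hz Hhi) as Hgap. simpl in Hgap.
    destruct (continuity_pt_eps (fun e => Psi k e z) d0 (z - Psi k d0 z)
      (Psi_continuous_d k hk d0 z ltac:(lra) (in_d_interval_ge_1 d0 Hd0)) ltac:(lra))
      as [del [Hdel Hc]].
    exists del. split; [exact Hdel|]. intros d Hd Hdd.
    destruct (Hxs d Hd) as [Hr Hfix].
    apply (gt_fixed_point d (xs d) Hd Hr Hfix); [lra|].
    specialize (Hc d Hdd). apply Rabs_def2 in Hc. simpl in Hc. lra.
Qed.

Lemma fixed_point_limit : limit1_in xs (in_d_interval k) (xs d0) d0.
Proof.
  intros eta Heta.
  destruct (fixed_point_eventually_gt (xs d0 - eta) ltac:(lra)) as [dl [Hdl Hl]].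
  destruct (fixed_point_eventually_lt (xs d0 + eta) ltac:(lra)) as [dr [Hdr Hr]].
  exists (Rmin dl dr). split; [apply Rmin_pos; lra|].
  intros d [Hd Hdist]. simpl in *. unfold Rdist in *.
  pose proof (Rmin_l dl dr). pose proof (Rmin_r dl dr).
  specialize (Hl d Hd ltac:(lra)). specialize (Hr d Hd ltac:(lra)).
  apply Rabs_def1; lra.
Qed.

Lemma Phi_fixed_point_limit :
  limit1_in (fun d => Phi k d (xs d)) (in_d_interval k) (Phi k d0 (xs d0)) d0.
Proof.
  pose proof (in_d_interval_ge_1 d0 Hd0).
  assert (Hx0 : 0 < xs d0 <= 1/2).
  { destruct (Hxs d0 Hd0) as [Hr _]. apply in_root_interval_bounds in Hr. lra. }
  apply limit1_in_ext with (fun d => Phi_intercept k (xs d) + d * Phi_slope k (xs d)).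
  { intros d Hd. pose proof (in_d_interval_ge_1 d Hd). rewrite Phi_affine; auto; lra. }
  rewrite Phi_affine by (auto; lra).
  apply limit_plus; [|apply limit_mul; [apply lim_x|]];
    apply limit1_in_comp_continuous; auto using fixed_point_limit.
  - apply Phi_intercept_continuous; auto.
  - apply Phi_slope_continuous; auto.
Qed.

End Continuity.

Lemma holds_at_fixed_point (d : R) (P : R -> Prop) (r : R) : in_d_interval k d ->
  holds_above_subsolution k d P -> in_root_interval k r -> Psi k d r = r -> P r.
Proof.
  intros Hd [x0 [Hx0 [Hsub HP]]] Hr Hfix.
  pose proof (le_fixed_point d r Hd Hr Hfix x0 Hx0 Hsub).
  apply HP. apply in_root_interval_bounds in Hr. lra.
Qed.

Theorem fixed_point_properties :
  holds_above_subsolution k (d_lbd k) (fun x => Phi k (d_lbd k) x > 0) ->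
  holds_above_subsolution k (d_ubd k) (fun x => Phi k (d_ubd k) x < 0) ->
  (forall d : R, in_d_interval k d ->
     exists! x : R, in_root_interval k x /\ Psi k d x = x) /\
  (forall xs : R -> R,
     (forall d : R, in_d_interval k d ->
        in_root_interval k (xs d) /\ Psi k d (xs d) = xs d) ->
     (forall d0 : R, in_d_interval k d0 ->
        limit1_in (fun d => Phi k d (xs d)) (in_d_interval k)
                  (Phi k d0 (xs d0)) d0) /\
     Phi k (d_lbd k) (xs (d_lbd k)) > 0 /\
     Phi k (d_ubd k) (xs (d_ubd k)) < 0).
Proof.
  intros Hlbd Hubd.
  assert (Hl : in_d_interval k (d_lbd k)) by (unfold in_d_interval; lra).
  assert (Hu : in_d_interval k (d_ubd k)) by (unfold in_d_interval; lra).
  split; [exact fixed_point_unique|].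
  intros xs Hxs. split; [|split].
  - intros d0 Hd0. exact (Phi_fixed_point_limit xs Hxs d0 Hd0).
  - destruct (Hxs _ Hl) as [Hr Hfix]. exact (holds_at_fixed_point _ _ _ Hl Hlbd Hr Hfix).
  - destruct (Hxs _ Hu) as [Hr Hfix]. exact (holds_at_fixed_point _ _ _ Hu Hubd Hr Hfix).
Qed.

End Reduction.

(** * Large k: expansions in e = 2^-k *)

Section Expansions.
Variables e K L : R.
Hypothesis He : 0 < e <= 1/64.
Hypothesis HK : 6 <= K.
Hypothesis HKe : K * e <= 3/32.
Hypothesis HKKe : K * K * e <= 9/16.
Hypothesis HL : 0.693 < L < 0.6932.

Lemma inv_2e_ge_32 : 32 <= 1/(2*e).
Proof. apply (Rmult_le_reg_r (2*e)); [lra|]. field_simplify; lra. Qed.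

Lemma cubic_tail_le (D u : R) : 0 <= D <= K*L/(2*e) -> 0 <= u <= 2*e ->
  D * (u^3/(3*(1 - u))) <= 0.0895 * e.
Proof.
  intros HD Hu.
  assert (u^3 <= (2*e)^3) by (apply pow_incr; lra).
  assert (Hq : u^3/(3*(1 - u)) <= (2*e)^3/(3*(1 - 2*e))).
  { apply Rle_trans with ((2*e)^3/(3*(1 - u))).
    - apply Rmult_le_compat_r; [left; apply Rinv_0_lt_compat|]; lra.
    - apply Rmult_le_compat_l; [nra|]. apply Rinv_le_contravar; lra. }
  assert (0 <= u^3/(3*(1 - u))) by (apply Rdiv_le_0_compat; [apply pow_le|]; lra).
  apply Rle_trans with (K*L/(2*e) * ((2*e)^3/(3*(1 - 2*e)))); [apply Rmult_le_compat; lra|].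
  replace (K*L/(2*e) * ((2*e)^3/(3*(1 - 2*e)))) with (4*(K*e*L)*e/(3*(1 - 2*e))) by (field; lra).
  assert (K*e*L <= 3/32 * 0.6932) by nra.
  apply (Rmult_le_reg_r (3*(1 - 2*e))); [lra|]. field_simplify; nra.
Qed.

(* Upper bound for Phi (d_ubd, 1/2 - c e), where p = (1 - 2 c e)^(k-1); the three
   groups come from -ln (1 - x), ln (1 - 2 x^k) and ln (1 - x^(k-1)). *)
Lemma Phi_ubd_expansion_le (c p : R) : 0 <= c <= 1 -> 0 < p <= 1 ->
  L - 2*c*e/(1 + 2*c*e)
  + ((K-1)*L/(2*e) - 1) * ((1-2*c*e)*(2*e*p) + ((1-2*c*e)*(2*e*p))^2/2
                           + ((1-2*c*e)*(2*e*p))^3/(3*(1 - (1-2*c*e)*(2*e*p))))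
  + (K*L/(2*e) - 1) * (-(2*e*p) - (2*e*p)^2/2)
  <= L*(1 - p) - 2*c*e*(K-1)*L*p + 4*c*e^2*p - 2*c*e/(1 + 2*c*e) - L*p^2*e + 0.0895*e.
Proof.
  intros Hc Hp.
  pose proof inv_2e_ge_32.
  assert (Hce : 0 <= c*e <= e) by nra.
  set (t := 2*e*p). set (u := (1 - 2*c*e)*t).
  assert (Ht : 0 < t <= 2*e) by (unfold t; nra).
  assert (Hut : 0 <= u <= t) by (unfold u; nra).
  set (D' := (K-1)*L/(2*e) - 1). set (d := K*L/(2*e)).
  assert (HD' : 0 <= D').
  { unfold D'. replace ((K-1)*L/(2*e)) with ((K-1)*L*(1/(2*e))) by (field; lra).
    assert (5*0.693 <= (K-1)*L) by nra. nra. }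
  assert (I1 : D'*u - (d-1)*t = - L*p - 2*c*e*((K-1)*L*p - 2*e*p)).
  { unfold D', d, u, t. field. lra. }
  assert (I2 : D'*(u^2/2) - (d-1)*(t^2/2) <= - L*p^2*e).
  { assert (D'*u^2 <= D'*t^2) by (apply Rmult_le_compat_l; nra).
    assert (D'*(t^2/2) - (d-1)*(t^2/2) = - L*p^2*e) by (unfold D', d, t; field; lra).
    lra. }
  assert (I3 : D'*(u^3/(3*(1 - u))) <= 0.0895*e).
  { apply cubic_tail_le; [|lra]. split; [lra|].
    unfold D'. assert (0 <= L/(2*e)) by (apply Rdiv_le_0_compat; lra).
    replace ((K-1)*L/(2*e)) with (K*L/(2*e) - L/(2*e)) by (field; lra). lra. }
  replace (L - 2*c*e/(1 + 2*c*e) + D'*(u + u^2/2 + u^3/(3*(1 - u))) + (d-1)*(- t - t^2/2))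
    with (L - 2*c*e/(1 + 2*c*e) + (D'*u - (d-1)*t) + (D'*(u^2/2) - (d-1)*(t^2/2))
          + D'*(u^3/(3*(1 - u)))) by ring.
  rewrite I1. lra.
Qed.

Lemma Phi_ubd_expansion_neg (c p : R) : 0 <= c <= 1 -> 1 - (K-1) * (2*c*e) <= p <= 1 ->
  L - 2*c*e/(1 + 2*c*e)
  + ((K-1)*L/(2*e) - 1) * ((1-2*c*e)*(2*e*p) + ((1-2*c*e)*(2*e*p))^2/2
                           + ((1-2*c*e)*(2*e*p))^3/(3*(1 - (1-2*c*e)*(2*e*p))))
  + (K*L/(2*e) - 1) * (-(2*e*p) - (2*e*p)^2/2) < 0.
Proof.
  intros Hc Hp.
  assert (Hce : 0 <= c*e <= e) by nra.
  assert (Hp0 : 13/16 <= p) by nra.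
  eapply Rle_lt_trans; [apply Phi_ubd_expansion_le; lra|].
  assert (I4 : L*(1 - p) - 2*c*e*(K-1)*L*p <= 4*(K-1)^2*c^2*e^2*L).
  { assert (L*((1-p) - 2*c*e*(K-1)*p) <= L*(2*(K-1)*c*e*(1-p))) by (apply Rmult_le_compat_l; nra).
    assert (2*(K-1)*c*e*(1-p) <= 2*(K-1)*c*e*(2*(K-1)*c*e)) by (apply Rmult_le_compat_l; nra).
    nra. }
  assert (F1 : 4*(K-1)^2*c^2*e^2*L <= 1.5597*c*e).
  { assert (Hq : 0 <= (K-1)^2*e <= 9/16)
      by (split; [apply Rmult_le_pos; [apply pow2_ge_0|lra]|nra]).
    assert (4*((K-1)^2*e)*c^2 <= 4*(9/16)*c) by nra.
    assert (4*((K-1)^2*e)*c^2*(e*L) <= 4*(9/16)*c*(e*0.6932)) by (apply Rmult_le_compat; nra).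
    nra. }
  assert (F2 : 64/33*c*e <= 2*c*e/(1 + 2*c*e)).
  { apply (Rmult_le_reg_r (1 + 2*c*e)); [nra|]. field_simplify; nra. }
  assert (F3 : 4*c*e^2*p <= c*e/16).
  { assert (e*p <= 1/64) by nra.
    replace (4*c*e^2*p) with (4*(c*e)*(e*p)) by ring. nra. }
  assert (F4 : 0.66*e*0.693 <= L*p^2*e).
  { assert (0.693*0.66 <= L*p^2) by (apply Rmult_le_compat; nra). nra. }
  nra.
Qed.

Lemma Phi_lbd_linear_terms_ge (c p : R) : 0 <= c <= 1/2 ->
  1 - (K-1)*(2*c*e) <= p <= 1 - (K-1)*(2*c*e) + (K-1)*(K-2)/2*(2*c*e)^2 ->
  - 0.6932*(9/32)*(35/32)*e <= L*(1 - p) - 2*c*e*(K-1)*L*p.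
Proof.
  intros Hc [Hp1 Hp2].
  assert (Hce : 0 <= c*e <= e/2) by nra.
  set (A := (K-1)*(2*c*e)) in *. set (B := (K-1)*(K-2)/2*(2*c*e)^2) in *.
  assert (HA : 0 <= A <= 3/32) by (unfold A; nra).
  assert (HB : 0 <= B <= 9/32*e).
  { unfold B. assert ((2*c*e)^2 <= e^2) by nra.
    assert ((K-1)*(K-2)/2*(2*c*e)^2 <= K*K/2*e^2) by (apply Rmult_le_compat; nra).
    split; nra. }
  replace (L*(1 - p) - 2*c*e*(K-1)*L*p) with (L*((1 - p)*(1 + A) - A)) by (unfold A; ring).
  assert ((A - B)*(1 + A) <= (1 - p)*(1 + A)) by (apply Rmult_le_compat_r; lra).
  assert (L*(- B*(1 + 3/32)) <= L*((1 - p)*(1 + A) - A)) by (apply Rmult_le_compat_l; nra).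
  nra.
Qed.

Lemma Phi_lbd_expansion_ge (c p : R) : 0 <= c <= 1/2 -> 0 < p <= 1 ->
  L - 2*c*e - p*L*(1 - 4*e) - 2*c*e*((K-1)*L*p) - e*p^2*L - 0.131*e - 0.0895*e
  <= L - 2*c*e
  + ((1/(2*e) - 2)*K*L*(1 - / K) - 1) * ((1-2*c*e)*(2*e*p) + ((1-2*c*e)*(2*e*p))^2/2)
  + ((1/(2*e) - 2)*K*L - 1) * (-(2*e*p) - (2*e*p)^2/2 - (2*e*p)^3/(3*(1 - 2*e*p))).
Proof.
  intros Hc Hp.
  pose proof inv_2e_ge_32.
  assert (Hce : 0 <= c*e <= e/2) by nra.
  set (lam := (1/(2*e) - 2)*L).
  assert (Hlam : 20 <= lam) by (unfold lam; nra).
  set (D' := (1/(2*e) - 2)*K*L*(1 - / K) - 1).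
  assert (ED : D' = (K-1)*lam - 1) by (unfold D', lam; field; lra).
  set (d := (1/(2*e) - 2)*K*L).
  assert (Ed : d = K*lam) by (unfold d, lam; ring).
  assert (HD' : 0 <= D') by (rewrite ED; nra).
  set (t := 2*e*p). set (u := (1 - 2*c*e)*t).
  assert (Ht : 0 < t <= 2*e) by (unfold t; nra).
  assert (I1 : D'*u - (d-1)*t = - lam*t - 2*c*e*D'*t) by (unfold u; rewrite ED, Ed; ring).
  assert (I2 : D'*(u^2/2) - (d-1)*(t^2/2) >= (t^2/2)*(- 4*c*e*D' - lam)).
  { assert (u^2 >= (1 - 4*c*e)*t^2) by (unfold u; nra).
    assert (Hu2 : D'*u^2 >= D'*((1 - 4*c*e)*t^2)) by (apply Rle_ge, Rmult_le_compat_l; lra).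
    rewrite Ed. rewrite ED in Hu2 |- *. nra. }
  assert (Elt : lam*t = p*L*(1 - 4*e)) by (unfold lam, t; field; lra).
  assert (Hlam_le : lam <= L/(2*e)).
  { unfold lam. replace ((1/(2*e) - 2)*L) with (L/(2*e) - 2*L) by (field; lra). lra. }
  assert (HD't : D'*t <= (K-1)*L*p).
  { apply Rle_trans with ((K-1)*(L/(2*e))*t); [apply Rmult_le_compat_r; [lra|]; rewrite ED; nra|].
    right. unfold t. field. lra. }
  assert (T2a : (t^2/2)*lam <= e*p^2*L).
  { unfold lam, t.
    replace ((2*e*p)^2/2*((1/(2*e) - 2)*L)) with (e*p^2*L - 4*e^2*p^2*L) by (field; lra).
    assert (0 <= e^2*p^2*L) by (apply Rmult_le_pos; [apply Rmult_le_pos; apply pow2_ge_0|lra]).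
    lra. }
  assert (T2b : 2*c*e*D'*t^2 <= 0.131*e).
  { replace (2*c*e*D'*t^2) with ((2*c*e*t)*(D'*t)) by ring.
    assert (0 <= 2*c*e*t) by nra.
    assert ((2*c*e*t)*(D'*t) <= (2*c*e*t)*((K-1)*L*p)) by (apply Rmult_le_compat_l; lra).
    assert (0 <= c*(K-1)*e <= 3/64) by nra.
    assert (0 <= p^2*L <= 0.6932) by nra.
    assert (4*(c*(K-1)*e)*(p^2*L) <= 4*(3/64)*0.6932) by nra.
    unfold t in *. nra. }
  assert (T3 : (d-1)*(t^3/(3*(1 - t))) <= 0.0895*e).
  { apply cubic_tail_le; [|lra]. split; [rewrite Ed; nra|].
    rewrite Ed. unfold lam.
    replace (K*((1/(2*e) - 2)*L)) with (K*L/(2*e) - 2*K*L) by (field; lra). nra. }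
  assert (- 2*c*e*D'*t >= - 2*c*e*((K-1)*L*p)).
  { assert (0 <= 2*c*e*((K-1)*L*p - D'*t)) by (apply Rmult_le_pos; lra). lra. }
  replace (L - 2*c*e + D'*(u + u^2/2) + (d-1)*(- t - t^2/2 - t^3/(3*(1 - t))))
    with (L - 2*c*e + (D'*u - (d-1)*t) + (D'*(u^2/2) - (d-1)*(t^2/2))
          - (d-1)*(t^3/(3*(1 - t)))) by ring.
  rewrite I1. lra.
Qed.

Lemma Phi_lbd_expansion_pos (c p : R) : 0 <= c <= 1/2 ->
  1 - (K-1)*(2*c*e) <= p <= 1 - (K-1)*(2*c*e) + (K-1)*(K-2)/2*(2*c*e)^2 -> p <= 1 ->
  0 < L - 2*c*e
  + ((1/(2*e) - 2)*K*L*(1 - / K) - 1) * ((1-2*c*e)*(2*e*p) + ((1-2*c*e)*(2*e*p))^2/2)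
  + ((1/(2*e) - 2)*K*L - 1) * (-(2*e*p) - (2*e*p)^2/2 - (2*e*p)^3/(3*(1 - 2*e*p))).
Proof.
  intros Hc Hp Hp3.
  pose proof (Phi_lbd_linear_terms_ge c p Hc Hp) as T4.
  assert (Hce : 0 <= c*e <= e/2) by nra.
  assert (Hp0 : 29/32 <= p) by nra.
  eapply Rlt_le_trans; [|apply Phi_lbd_expansion_ge; lra].
  assert (F7 : 3*p*L*e <= 4*e*p*L - e*p^2*L).
  { assert (0 <= e*p*L*(1 - p)) by (repeat apply Rmult_le_pos; lra). nra. }
  assert (F8 : 3*(29/32)*0.693*e <= 3*p*L*e).
  { assert (29/32*0.693 <= p*L) by (apply Rmult_le_compat; lra). nra. }
  nra.
Qed.

End Expansions.

Lemma pow2_dominates (m : nat) :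
  (16 * ((6 + m) * (6 + m)) <= 9 * 2^(6 + m))%nat /\ (32 * (6 + m) <= 3 * 2^(6 + m))%nat.
Proof.
  induction m as [|m [IH1 IH2]]; [simpl; lia|].
  replace (6 + S m)%nat with (S (6 + m)) by lia. rewrite Nat.pow_succ_r'. split; nia.
Qed.

Lemma pow2_pred (k : nat) : (1 <= k)%nat -> 2^(k-1) = 1 / (2 * (1/2^k)).
Proof.
  intros Hk. replace k with (S (k - 1)) at 2 by lia. simpl. field. apply pow_nonzero; lra.
Qed.

Lemma half_pow_sub (n k : nat) : (n <= k)%nat -> (1/2)^(k-n) = 2^n * (1/2^k).
Proof.
  intros Hnk. replace k with ((k - n) + n)%nat at 2 by lia. rewrite pow_add.
  replace (1/2) with (/2) by field. rewrite pow_inv.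
  field. split; apply pow_nonzero; lra.
Qed.

Lemma ln_inv_pow2 (k : nat) : ln (1/2^k) = - (INR k * ln 2).
Proof.
  unfold Rdiv. rewrite Rmult_1_l, ln_Rinv, ln_pow; [ring|lra|apply pow_lt; lra].
Qed.

Lemma d_lbd_eq (k : nat) : (5 <= k)%nat -> d_lbd k = (2^(k-1) - 2) * INR k * ln 2.
Proof. intros Hk. do 5 (destruct k as [|k]; [lia|]). reflexivity. Qed.

Lemma d_ubd_eq (k : nat) : (4 <= k)%nat -> d_ubd k = 2^(k-1) * INR k * ln 2.
Proof. intros Hk. do 4 (destruct k as [|k]; [lia|]). reflexivity. Qed.

Section LargeK.
Variable k : nat.
Hypothesis hk : (6 <= k)%nat.
Let hk3 : (3 <= k)%nat. Proof. lia. Qed.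
Let e := 1/2^k.
Let K := INR k.
Let L := ln 2.

Lemma small_e : 0 < e /\ e <= 1/64 /\ K * e <= 3/32 /\ K * K * e <= 9/16 /\ 6 <= K.
Proof.
  destruct (pow2_dominates (k - 6)) as [H1 H2]. replace (6 + (k - 6))%nat with k in * by lia.
  apply le_INR in H1, H2. rewrite !mult_INR, !pow_INR in H1. rewrite !mult_INR, !pow_INR in H2.
  simpl INR in H1, H2. fold K in H1, H2.
  assert (6 <= K) by (unfold K; replace 6 with (INR 6) by (simpl; lra); apply le_INR; lia).
  assert (Hp : 0 < 2^k) by (apply pow_lt; lra).
  replace (1 + 1) with 2 in H1, H2 by ring.
  unfold e. repeat split; try lra.
  - apply Rdiv_lt_0_compat; lra.
  - apply (Rmult_le_reg_r (2^k)); [lra|]. field_simplify; lra.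
  - apply (Rmult_le_reg_r (2^k)); [lra|]. field_simplify; lra.
  - apply (Rmult_le_reg_r (2^k)); [lra|]. field_simplify; lra.
Qed.

Lemma ln2_coarse : 0.693 < L < 0.6932.
Proof. pose proof ln2_bounds. unfold L. lra. Qed.

Lemma d_lbd_large : d_lbd k = (1/(2*e) - 2) * K * L.
Proof. rewrite d_lbd_eq, pow2_pred by lia. reflexivity. Qed.

Lemma d_ubd_large : d_ubd k = K * L / (2*e).
Proof.
  rewrite d_ubd_eq, pow2_pred by lia. fold e K L. field.
  pose proof small_e. lra.
Qed.

Lemma d_lbd_ge_100 : 100 <= d_lbd k.
Proof.
  rewrite d_lbd_large. destruct small_e as [He [He1 [Hu [Hq HK]]]]. pose proof ln2_coarse.
  pose proof (inv_2e_ge_32 e (conj He He1)).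
  assert (180 <= (1/(2*e) - 2) * K) by nra. nra.
Qed.

Lemma d_lbd_le_ubd_large : d_lbd k <= d_ubd k.
Proof.
  rewrite d_lbd_large, d_ubd_large. destruct small_e as [He _]. pose proof ln2_coarse.
  assert (0 <= K * L) by (apply Rmult_le_pos; [apply pos_INR|lra]).
  replace ((1/(2*e) - 2) * K * L) with (K * L / (2*e) - 2 * (K * L)) by (field; lra). lra.
Qed.

Lemma pow_pred_at (c : R) : (1/2 - c*e)^(k-1) = 2*e*(1 - 2*c*e)^(k-1).
Proof.
  destruct small_e as [He _].
  replace (1/2 - c*e) with (/2 * (1 - 2*c*e)) by field.
  rewrite Rpow_mult_distr, pow_inv, pow2_pred by lia. fold e. field. lra.
Qed.

Lemma one_sub_pow_bounds (c : R) : 0 <= c <= 1 ->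
  1 - (K-1) * (2*c*e) <= (1 - 2*c*e)^(k-1) <= 1 - (K-1) * (2*c*e) + (K-1)*(K-2)/2 * (2*c*e)^2
  /\ (1 - 2*c*e)^(k-1) <= 1.
Proof.
  intros Hc. destruct small_e as [He [He1 _]].
  assert (Hz : 0 <= 2*c*e <= 1) by nra.
  pose proof (one_sub_pow_ge (2*c*e) (k-1) Hz) as B1.
  pose proof (one_sub_pow_le (2*c*e) (k-1) Hz) as B2.
  rewrite minus_INR in B1, B2 by lia. change (INR 1) with 1 in B1, B2. fold K in B1, B2.
  replace (K - 1 - 1) with (K - 2) in B2 by ring.
  split; [split; lra|]. apply pow_le_one. lra.
Qed.

Lemma pow_pred_ge (c0 x : R) : 0 <= c0 <= 1 -> 1/2 - c0 * e <= x <= 1/2 ->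
  2 * e * (1 - (K-1) * (2*c0*e)) <= x^(k-1) <= 2 * e.
Proof.
  intros Hc0 Hx. destruct small_e as [He [He1 [Hu [Hq HK]]]].
  set (c := (1/2 - x)/e).
  assert (Hc : 0 <= c <= c0).
  { unfold c. split; [apply Rdiv_le_0_compat; lra|].
    apply (Rmult_le_reg_r e); [lra|]. field_simplify; lra. }
  replace x with (1/2 - c*e) by (unfold c; field; lra). rewrite pow_pred_at.
  destruct (one_sub_pow_bounds c ltac:(lra)) as [[Hp1 Hp2] Hp3].
  split; [|nra].
  apply Rmult_le_compat_l; [lra|].
  assert ((K-1) * (2*c*e) <= (K-1) * (2*c0*e)) by (apply Rmult_le_compat_l; nra). lra.
Qed.

(* For d >= d_lbd and x in [1/2 - e, 1/2], (d - 1) ln (Psi_hat x) is about -K L. *)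
Lemma Psi_pow_lt (d x : R) : d_lbd k <= d -> root_lo k <= x <= 1/2 ->
  Psi_pow k d x < 4 * e / (1 + 2 * e).
Proof.
  intros Hd Hx. change (root_lo k) with (1/2 - e) in Hx.
  destruct small_e as [He [He1 [Hu [Hq HK]]]]. pose proof ln2_coarse.
  pose proof d_lbd_ge_100.
  destruct (pow_pred_ge 1 x ltac:(lra) ltac:(lra)) as [Ht _].
  pose proof (ln_Psi_hat_le k hk3 x ltac:(lra)) as Hv.
  assert (HlnW : (d - 1) * ln (Psi_hat k x) <= - (d_lbd k - 1) * (2 * e * (1 - (K-1) * (2*1*e)))).
  { assert ((d - 1) * ln (Psi_hat k x) <= (d - 1) * (- x^(k-1))) by (apply Rmult_le_compat_l; lra).
    assert (0 <= 2 * e * (1 - (K-1) * (2*1*e))) by nra. nra. }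
  assert (Heq : (d_lbd k - 1) * (2 * e) = (1 - 4*e) * K * L - 2 * e).
  { rewrite d_lbd_large. field. lra. }
  assert (Hln : 2 * L - K * L - 2 * e <= ln (4 * e / (1 + 2 * e))).
  { replace (4 * e / (1 + 2 * e)) with (2 * (2 * (e * / (1 + 2 * e)))) by (field; lra).
    assert (0 < / (1 + 2 * e)) by (apply Rinv_0_lt_compat; lra).
    assert (0 < e * / (1 + 2 * e)) by (apply Rmult_lt_0_compat; lra).
    rewrite !ln_mult, ln_Rinv by lra.
    replace (ln e) with (- (K * L)) by (symmetry; apply ln_inv_pow2).
    pose proof (ln_le_sub1 (1 + 2 * e) ltac:(lra)). fold L. lra. }
  assert (Hkey : - (d_lbd k - 1) * (2 * e * (1 - (K-1) * (2*1*e))) < 2 * L - K * L - 2 * e).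
  { replace (- (d_lbd k - 1) * (2 * e * (1 - (K-1) * (2*1*e))))
      with (- ((d_lbd k - 1) * (2 * e)) * (1 - (K-1) * (2*1*e))) by ring.
    rewrite Heq.
    assert (L * (K * K * e) <= 0.6932 * (9/16)) by (apply Rmult_le_compat; nra).
    assert (L * (K * e) <= 0.6932 * (3/32)) by (apply Rmult_le_compat; nra).
    assert (e * (L * (K * e)) <= 1/64 * (0.6932 * (3/32))) by (apply Rmult_le_compat; nra).
    nra. }
  unfold Psi_pow, Rpower.
  rewrite <- (exp_ln (4 * e / (1 + 2 * e))) by (apply Rdiv_lt_0_compat; lra).
  apply exp_increasing. lra.
Qed.

Lemma root_lo_lt_Psi_lbd_large : root_lo k < Psi k (d_lbd k) (root_lo k).
Proof.
  pose proof d_lbd_ge_100. destruct small_e as [He [He1 _]].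
  pose proof (root_lo_bounds k hk3).
  apply (lt_Psi_of_Psi_pow k hk3); try lra.
  pose proof (Psi_pow_lt (d_lbd k) (root_lo k) ltac:(lra) ltac:(lra)) as HW.
  change (root_lo k) with (1/2 - e) in *.
  apply (Rmult_lt_compat_r (1 - (1/2 - e))) in HW; [|lra].
  replace (4 * e / (1 + 2 * e) * (1 - (1/2 - e))) with (1 - 2 * (1/2 - e)) in HW by (field; lra).
  exact HW.
Qed.

Lemma gap_decreasing_large : Psi_gap_decreasing k.
Proof.
  intros d Hd. unfold in_d_interval in Hd.
  pose proof d_lbd_ge_100. destruct small_e as [He [He1 [Hu [Hq HK]]]]. pose proof ln2_coarse.
  pose proof (root_lo_bounds k hk3).
  apply (gap_decreasing_of_bounds k hk3 d _ _ (2 * K * L) (4 * e)); try lra.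
  - intros x Hx.
    pose proof (Psi_pow_lt d x ltac:(lra) Hx). pose proof (Psi_pow_pos k d x).
    assert (4 * e / (1 + 2 * e) <= 4 * e).
    { apply (Rmult_le_reg_r (1 + 2*e)); [lra|]. field_simplify; nra. }
    rewrite d_ubd_large in Hd. split; [|lra].
    apply Rle_trans with (K * L / (2*e) * (4 * e)); [apply Rmult_le_compat; lra|].
    right. field. lra.
  - rewrite (half_pow_sub 2 k), (half_pow_sub 1 k) by lia. fold e.
    unfold Psi_hat. rewrite (half_pow_sub 1 k) by lia. fold e K.
    replace (2^2) with 4 by ring. replace (2^1) with 2 by ring.
    replace (2 * K * L * (K - 1) * (4 * e)) with (8 * (L * (K * K * e) - L * (K * e))) by ring.
    assert (L * (K * K * e) <= 0.6932 * (9/16)) by (apply Rmult_le_compat; nra).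
    assert (0 <= L * (K * e)) by (apply Rmult_le_pos; [lra|apply Rmult_le_pos; lra]).
    replace ((1 - 2 * e)^2 * ((1 - 2 * (2 * e)) / (1 - 2 * e)) * (2 - 4 * e)^2)
      with ((1 - 2 * e) * (1 - 4 * e) * (2 - 4 * e)^2) by (field; lra).
    assert (0.96 * 0.9375 <= (1 - 2 * e) * (1 - 4 * e)) by nra.
    assert (3.75 <= (2 - 4 * e)^2) by nra.
    assert (0.96 * 0.9375 * 3.75 <= (1 - 2 * e) * (1 - 4 * e) * (2 - 4 * e)^2)
      by (apply Rmult_le_compat; lra).
    lra.
Qed.

Lemma ln_half_add (c : R) : 0 <= c -> ln (1 - (1/2 - c*e)) = ln (1 + 2*c*e) - L.
Proof.
  intros Hc. destruct small_e as [He _].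
  replace (1 - (1/2 - c*e)) with ((1 + 2*c*e) * /2) by field.
  rewrite ln_mult, ln_Rinv by (try apply Rinv_0_lt_compat; nra). reflexivity.
Qed.

Lemma subsolution_lbd_large : 1/2 - e/2 < Psi k (d_lbd k) (1/2 - e/2).
Proof.
  pose proof d_lbd_ge_100. destruct small_e as [He [He1 [Hu [Hq HK]]]]. pose proof ln2_coarse.
  destruct (pow_pred_ge (1/2) (1/2 - e/2) ltac:(lra) ltac:(lra)) as [Ht _].
  pose proof (ln_Psi_hat_le k hk3 (1/2 - e/2) ltac:(lra)) as Hv.
  apply (lt_Psi_of_ln_bound k hk3 _ _ _ (- (d_lbd k - 1) * (2 * e * (1 - (K-1) * e))));
    try lra.
  - assert (0 <= 2 * e * (1 - (K-1) * e)) by nra.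
    assert ((d_lbd k - 1) * ln (Psi_hat k (1/2 - e/2)) <= (d_lbd k - 1) * (- (1/2 - e/2)^(k-1)))
      by (apply Rmult_le_compat_l; lra).
    replace (2 * (1/2) * e) with e in Ht by field. nra.
  - replace ((1 - 2 * (1/2 - e/2)) / (1 - (1/2 - e/2))) with (2 * (e * / (1 + e))) by (field; lra).
    assert (0 < / (1 + e)) by (apply Rinv_0_lt_compat; lra).
    assert (0 < e * / (1 + e)) by (apply Rmult_lt_0_compat; lra).
    rewrite !ln_mult, ln_Rinv by lra.
    replace (ln e) with (- (K * L)) by (symmetry; apply ln_inv_pow2). fold L.
    pose proof (ln_le_sub1 (1 + e) ltac:(lra)).
    assert (Heq : (d_lbd k - 1) * (2 * e) = (1 - 4*e) * K * L - 2 * e).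
    { rewrite d_lbd_large. field. lra. }
    replace (- (d_lbd k - 1) * (2 * e * (1 - (K-1) * e)))
      with (- ((d_lbd k - 1) * (2 * e)) * (1 - (K-1) * e)) by ring.
    rewrite Heq.
    assert (L * (K * K * e) <= 0.6932 * (9/16)) by (apply Rmult_le_compat; nra).
    assert (L * (K * e) <= 0.6932 * (3/32)) by (apply Rmult_le_compat; nra).
    assert (e * (L * (K * e)) <= 1/64 * (0.6932 * (3/32))) by (apply Rmult_le_compat; nra).
    nra.
Qed.

Lemma Phi_lbd_pos_large (x : R) : 1/2 - e/2 <= x <= 1/2 -> Phi k (d_lbd k) x > 0.
Proof.
  intros Hx. pose proof d_lbd_ge_100. destruct small_e as [He [He1 [Hu [Hq HK]]]].
  pose proof ln2_coarse as HL.
  set (c := (1/2 - x)/e).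
  assert (Hc : 0 <= c <= 1/2).
  { unfold c. split; [apply Rdiv_le_0_compat; lra|].
    apply (Rmult_le_reg_r e); [lra|]. field_simplify; lra. }
  assert (Hxc : x = 1/2 - c*e) by (unfold c; field; lra).
  rewrite Phi_eq, pow_succ_pred by (auto; lra). fold K.
  rewrite Hxc, pow_pred_at, ln_half_add by lra.
  destruct (one_sub_pow_bounds c ltac:(lra)) as [Hp Hp3].
  set (p := (1 - 2*c*e)^(k-1)) in *.
  replace (2 * ((1/2 - c*e) * (2*e*p))) with ((1 - 2*c*e) * (2*e*p)) by field.
  assert (0.8 <= p) by nra.
  assert (0 < 2*e*p <= 2*e) by nra.
  assert (0 <= 1 - 2*c*e <= 1) by nra.
  pose proof (ln_one_sub_le ((1 - 2*c*e) * (2*e*p)) ltac:(nra)) as B2.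
  pose proof (ln_one_sub_ge (2*e*p) ltac:(nra)) as B3.
  pose proof (ln_le_sub1 (1 + 2*c*e) ltac:(nra)) as B1.
  rewrite d_lbd_large in *.
  pose proof (inv_2e_ge_32 e (conj He He1)).
  assert (0 <= (1/(2*e) - 2) * K * L * (1 - / K) - 1).
  { replace ((1/(2*e) - 2) * K * L * (1 - / K) - 1) with ((1/(2*e) - 2) * (K - 1) * L - 1)
      by (field; lra).
    assert (150 <= (1/(2*e) - 2) * (K - 1)) by nra. nra. }
  pose proof (Phi_lbd_expansion_pos e K L (conj He He1) HK Hu Hq HL c p Hc Hp Hp3).
  apply Ropp_le_contravar in B2.
  apply (Rmult_le_compat_r ((1/(2*e) - 2) * K * L * (1 - / K) - 1)) in B2; [|lra].
  apply (Rmult_le_compat_l ((1/(2*e) - 2) * K * L - 1)) in B3; [|lra].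
  lra.
Qed.

Lemma Phi_ubd_neg_large (x : R) : root_lo k <= x <= 1/2 -> Phi k (d_ubd k) x < 0.
Proof.
  intros Hx. change (root_lo k) with (1/2 - e) in Hx.
  pose proof d_lbd_ge_100. pose proof d_lbd_le_ubd_large.
  destruct small_e as [He [He1 [Hu [Hq HK]]]]. pose proof ln2_coarse as HL.
  set (c := (1/2 - x)/e).
  assert (Hc : 0 <= c <= 1).
  { unfold c. split; [apply Rdiv_le_0_compat; lra|].
    apply (Rmult_le_reg_r e); [lra|]. field_simplify; lra. }
  assert (Hxc : x = 1/2 - c*e) by (unfold c; field; lra).
  rewrite Phi_eq, pow_succ_pred by (auto; lra). fold K.
  rewrite Hxc, pow_pred_at, ln_half_add by lra.
  destruct (one_sub_pow_bounds c ltac:(lra)) as [[Hp1 _] Hp3].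
  set (p := (1 - 2*c*e)^(k-1)) in *.
  replace (2 * ((1/2 - c*e) * (2*e*p))) with ((1 - 2*c*e) * (2*e*p)) by field.
  assert (0.8 <= p) by nra.
  assert (0 < 2*e*p <= 2*e) by nra.
  assert (0 <= 1 - 2*c*e <= 1) by nra.
  pose proof (ln_one_sub_ge ((1 - 2*c*e) * (2*e*p)) ltac:(nra)) as B2.
  pose proof (ln_one_sub_le (2*e*p) ltac:(nra)) as B3.
  pose proof (ln_ge_1_sub_inv (1 + 2*c*e) ltac:(nra)) as B1.
  replace (1 - / (1 + 2*c*e)) with (2*c*e/(1 + 2*c*e)) in B1 by (field; nra).
  rewrite d_ubd_large in *.
  replace (K * L / (2*e) * (1 - / K) - 1) with ((K-1)*L/(2*e) - 1) by (field; lra).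
  pose proof (inv_2e_ge_32 e (conj He He1)).
  assert (0 <= (K-1)*L/(2*e) - 1).
  { replace ((K-1)*L/(2*e)) with ((K-1)*L*(1/(2*e))) by (field; lra).
    assert (3 <= (K-1)*L) by nra. nra. }
  pose proof (Phi_ubd_expansion_neg e K L (conj He He1) HK Hu Hq HL c p Hc (conj Hp1 Hp3)).
  apply Ropp_le_contravar in B2.
  apply (Rmult_le_compat_r ((K-1)*L/(2*e) - 1)) in B2; [|lra].
  apply (Rmult_le_compat_l (K * L / (2*e) - 1)) in B3; [|lra].
  lra.
Qed.

Lemma Phi_lbd_certificate_large :
  holds_above_subsolution k (d_lbd k) (fun x => Phi k (d_lbd k) x > 0).
Proof.
  destruct small_e as [He [He1 _]]. pose proof subsolution_lbd_large.
  exists (1/2 - e/2). change (root_lo k) with (1/2 - e).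
  repeat split; try lra. apply Phi_lbd_pos_large.
Qed.

Lemma Phi_ubd_certificate_large :
  holds_above_subsolution k (d_ubd k) (fun x => Phi k (d_ubd k) x < 0).
Proof.
  pose proof d_lbd_ge_100. pose proof d_lbd_le_ubd_large as Hlu.
  pose proof root_lo_lt_Psi_lbd_large. pose proof (root_lo_bounds k hk3).
  pose proof (Psi_monotone_d k hk3 (d_lbd k) (d_ubd k) (root_lo k) ltac:(lra) ltac:(lra) Hlu).
  exists (root_lo k). repeat split; try lra. apply Phi_ubd_neg_large.
Qed.

End LargeK.

(** * Small k: rational interval arithmetic *)

Lemma ln_enclosure_above (j : nat) (Z : R) : 2^j <= Z ->
  ln_series_lb ((Z/2^j - 1)/(Z/2^j + 1)) + INR j * 0.693147 <= ln Z <=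
  ln_series_ub ((Z/2^j - 1)/(Z/2^j + 1)) + INR j * 0.6931472.
Proof.
  intros HZ. pose proof (pow_lt 2 j ltac:(lra)).
  assert (Hq : 1 <= Z/2^j) by (apply (Rmult_le_reg_r (2^j)); [lra|]; field_simplify; lra).
  replace (ln Z) with (ln (Z/2^j) + INR j * ln 2)
    by (rewrite <- ln_pow, <- ln_mult by (try apply Rdiv_lt_0_compat; lra); f_equal; field; lra).
  pose proof (ln_series_bounds _ Hq). pose proof ln2_bounds. pose proof (pos_INR j).
  split; nra.
Qed.

Lemma ln_enclosure_below (j : nat) (Z : R) : 0 < Z <= 2^j ->
  - ln_series_ub ((2^j/Z - 1)/(2^j/Z + 1)) + INR j * 0.693147 <= ln Z <=
  - ln_series_lb ((2^j/Z - 1)/(2^j/Z + 1)) + INR j * 0.6931472.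
Proof.
  intros HZ. pose proof (pow_lt 2 j ltac:(lra)).
  assert (Hq : 1 <= 2^j/Z) by (apply (Rmult_le_reg_r Z); [lra|]; field_simplify; lra).
  replace (ln Z) with (- ln (2^j/Z) + INR j * ln 2).
  2:{ unfold Rdiv. rewrite ln_mult, ln_Rinv, ln_pow by (try apply Rinv_0_lt_compat; lra). ring. }
  pose proof (ln_series_bounds _ Hq). pose proof ln2_bounds. pose proof (pos_INR j).
  split; nra.
Qed.

Lemma ln_bounds_of_inv (Z a b : R) : 0 < Z -> a <= ln (/ Z) <= b -> - b <= ln Z <= - a.
Proof. intros HZ H. rewrite ln_Rinv in H by lra. lra. Qed.

Ltac closed_real t :=
  lazymatch t with
  | IZR _ => idtac
  | ?a + ?b => closed_real a; closed_real b
  | ?a - ?b => closed_real a; closed_real b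
  | ?a * ?b => closed_real a; closed_real b
  | ?a / ?b => closed_real a; closed_real b
  | - ?a => closed_real a
  | / ?a => closed_real a
  | ?a ^ _ => closed_real a
  end.

Ltac closed_lra := repeat match goal with H : _ |- _ => clear H end; simpl; lra.

(* Rescale Z >= 2^j by the power of 2 nearest to it, so that the atanh series
   converges fast. *)
Ltac ln_enclose_from Z j H :=
  tryif assert_succeeds (assert (Z <= 1.4142 * 2^j) by closed_lra)
  then pose proof (ln_enclosure_above j Z ltac:(closed_lra)) as H
  else tryif assert_succeeds (assert (Z <= 2^(S j)) by closed_lra)
  then pose proof (ln_enclosure_below (S j) Z ltac:(closed_lra)) as H
  else ln_enclose_from Z (S j) H.

Ltac ln_enclose Z :=
  let H := fresh "Hln" in
  tryif assert_succeeds (assert (1 <= Z) by closed_lra)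
  then ln_enclose_from Z O H
  else (ln_enclose_from (/ Z) O H; apply ln_bounds_of_inv in H; [|closed_lra]);
  unfold ln_series_ub, ln_series_lb in H; simpl INR in H.

Ltac ln_lra :=
  repeat match goal with
  | |- context [ln ?Z] =>
      closed_real Z;
      lazymatch goal with
      | _ : _ <= ln Z <= _ |- _ => fail
      | _ => ln_enclose Z
      end
  end;
  lra.

Ltac interval_lra := unfold Psi_hat, d_lbd, d_ubd, root_lo; simpl; ln_lra.

Section Certificates.
Variable k : nat.
Hypothesis hk : (3 <= k)%nat.

Lemma lt_Psi_of_ln (d dlo x y : R) : 0 < x <= 1/2 -> 1 <= dlo <= d -> y < 1/2 ->
  (dlo - 1) * ln (Psi_hat k x) < ln ((1 - 2*y)/(1 - y)) -> y < Psi k d x.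
Proof.
  intros Hx Hd Hy H. pose proof (ln_Psi_hat_neg k hk x Hx).
  apply (lt_Psi_of_ln_bound k hk d x y ((dlo - 1) * ln (Psi_hat k x))); auto; [lra|nra].
Qed.

(* With z = (d - 1) m >= M0 >= 1: (d - 1) W <= z e^-z / m <= M0 e^-M0 / m. *)
Lemma Psi_pow_bound_of_ln (dl xl m M0 W d x : R) : 1 <= dl <= d -> 0 < xl <= x -> x <= 1/2 ->
  0 < m -> ln (Psi_hat k xl) <= - m -> 1 <= M0 <= (dl - 1) * m -> exp (- M0) <= W ->
  (d - 1) * Psi_pow k d x <= M0 * W / m /\ Psi_pow k d x <= W.
Proof.
  intros Hd Hx Hx2 Hm Hln HM0 HW.
  pose proof (Psi_hat_bounds k hk x ltac:(lra)). pose proof (Psi_hat_bounds k hk xl ltac:(lra)).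
  assert (Hlx : ln (Psi_hat k x) <= - m).
  { eapply Rle_trans; [|exact Hln]. apply ln_le_ln; [lra|]. apply Psi_hat_antitone; auto; lra. }
  set (z := (d - 1) * m).
  assert (Hz : M0 <= z) by (unfold z; nra).
  assert (Hwz : Psi_pow k d x <= exp (- z)) by (unfold Psi_pow, Rpower, z; apply exp_le_exp; nra).
  assert (exp (- z) <= exp (- M0)) by (apply exp_le_exp; lra).
  split; [|lra].
  pose proof (mul_exp_neg_antitone M0 z ltac:(lra)).
  apply Rle_trans with (z * exp (- z) / m).
  - unfold z. replace ((d - 1) * m * exp (- ((d - 1) * m)) / m)
      with ((d - 1) * exp (- ((d - 1) * m))) by (field; lra).
    apply Rmult_le_compat_l; [lra|exact Hwz].
  - apply Rmult_le_compat_r; [left; apply Rinv_0_lt_compat; lra|].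
    pose proof (exp_pos (- M0)). nra.
Qed.

Lemma gap_decreasing_piece (dl xl xr m M0 W : R) : 1 <= dl -> 0 < xl -> xr <= 1/2 ->
  0 < m -> ln (Psi_hat k xl) <= - m -> 1 <= M0 <= (dl - 1) * m ->
  1 <= W * (1 + M0/4 + (M0/4)^2/2 + (M0/4)^3/6 + (M0/4)^4/24)^4 -> W < 2 ->
  M0 * W / m * (INR k - 1) * xr^(k-2) < (1 - xr^(k-1))^2 * Psi_hat k xr * (2 - W)^2 ->
  forall d, dl <= d -> strictly_decreasing_on (fun x => Psi k d x - x) xl xr.
Proof.
  intros Hdl Hxl Hxr Hm Hln HM0 HW HW2 HC d Hd.
  pose proof (exp_neg_le_of_taylor4 M0 W ltac:(lra) HW).
  apply (gap_decreasing_of_bounds k hk d xl xr (M0 * W / m) W); auto; [lra|].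
  intros x Hx. apply (Psi_pow_bound_of_ln dl xl m M0 W d x); auto; lra.
Qed.

Lemma Phi_ge_of_d_bounds (d dlo dhi x : R) : 0 < x <= 1/2 -> 1 <= dlo <= d -> d <= dhi ->
  0 <= dlo * (1 - / INR k) - 1 ->
  - ln (1 - x) - (dlo * (1 - / INR k) - 1) * ln (1 - 2 * x^k) + (dhi - 1) * ln (1 - x^(k-1))
  <= Phi k d x.
Proof.
  intros Hx Hd Hdh HD. rewrite Phi_eq by (auto; lra).
  pose proof (pow_k_bounds k hk x Hx). pose proof (pow_pred_bounds k hk x Hx).
  assert (ln (1 - 2 * x^k) <= 0) by (rewrite <- ln_1; apply ln_le_ln; lra).
  assert (ln (1 - x^(k-1)) <= 0) by (rewrite <- ln_1; apply ln_le_ln; lra).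
  assert (0 <= / INR k <= 1).
  { assert (1 <= INR k) by (replace 1 with (INR 1) by reflexivity; apply le_INR; lia).
    split; [left; apply Rinv_0_lt_compat; lra|].
    rewrite <- Rinv_1. apply Rinv_le_contravar; lra. }
  assert (dlo * (1 - / INR k) <= d * (1 - / INR k)) by (apply Rmult_le_compat_r; lra).
  nra.
Qed.

Lemma Phi_le_of_d_bounds (d dlo dhi x : R) : 0 < x <= 1/2 -> 1 <= dlo <= d -> d <= dhi ->
  Phi k d x <=
  - ln (1 - x) - (dhi * (1 - / INR k) - 1) * ln (1 - 2 * x^k) + (dlo - 1) * ln (1 - x^(k-1)).
Proof.
  intros Hx Hd Hdh. rewrite Phi_eq by (auto; lra).
  pose proof (pow_k_bounds k hk x Hx). pose proof (pow_pred_bounds k hk x Hx).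
  assert (ln (1 - 2 * x^k) <= 0) by (rewrite <- ln_1; apply ln_le_ln; lra).
  assert (ln (1 - x^(k-1)) <= 0) by (rewrite <- ln_1; apply ln_le_ln; lra).
  assert (0 <= 1 - / INR k).
  { assert (1 <= INR k) by (replace 1 with (INR 1) by reflexivity; apply le_INR; lia).
    assert (/ INR k <= 1) by (rewrite <- Rinv_1; apply Rinv_le_contravar; lra). lra. }
  assert (d * (1 - / INR k) <= dhi * (1 - / INR k)) by (apply Rmult_le_compat_r; lra).
  nra.
Qed.

End Certificates.

Lemma Phi_pos_above_subsolution (k : nat) (d x0 : R) :
  root_lo k <= x0 <= 1/2 -> x0 <= Psi k d x0 -> 0 < Phi k d x0 ->
  strictly_increasing_on (Phi k d) x0 (1/2) ->
  holds_above_subsolution k d (fun x => Phi k d x > 0).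
Proof.
  intros Hx0 Hsub HP Hinc. exists x0. repeat split; try lra.
  intros x Hx. destruct (Req_dec x x0) as [->|]; [lra|].
  assert (Phi k d x0 < Phi k d x) by (apply Hinc; lra). lra.
Qed.

Lemma Phi_neg_above_subsolution (k : nat) (d x0 : R) :
  root_lo k <= x0 <= 1/2 -> x0 <= Psi k d x0 -> Phi k d (1/2) < 0 ->
  strictly_increasing_on (Phi k d) x0 (1/2) ->
  holds_above_subsolution k d (fun x => Phi k d x < 0).
Proof.
  intros Hx0 Hsub HP Hinc. exists x0. repeat split; try lra.
  intros x Hx. destruct (Req_dec x (1/2)) as [->|]; [lra|].
  assert (Phi k d x < Phi k d (1/2)) by (apply Hinc; lra). lra.
Qed.

Ltac split_at_dec q := apply (strictly_decreasing_on_cat _ _ q).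

Ltac split_at_inc q := apply (strictly_increasing_on_cat _ _ q).

Ltac gap_piece k m M0 W :=
  apply (gap_decreasing_piece k ltac:(lia) (d_lbd k) _ _ m M0 W); solve [lra | interval_lra].

Ltac increasing_piece k :=
  apply (Phi_increasing_of_bounds k ltac:(lia)); solve [lra | interval_lra].

Ltac Phi_pos_at k dlo dhi :=
  (eapply Rlt_le_trans; [|apply (Phi_ge_of_d_bounds k ltac:(lia) _ dlo dhi)]);
  solve [lra | interval_lra].

Ltac Phi_neg_at k dlo dhi :=
  (eapply Rle_lt_trans; [apply (Phi_le_of_d_bounds k ltac:(lia) _ dlo dhi)|]);
  solve [lra | interval_lra].

Ltac subsolution_at k dlo :=
  left; apply (lt_Psi_of_ln k ltac:(lia) _ dlo); solve [lra | interval_lra].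

(* The subdivision points, subsolutions x0 and constants m, M0, W below were found
   numerically; only their validity is checked here. *)
Lemma gap_decreasing_3 : Psi_gap_decreasing 3.
Proof.
  intros d Hd. unfold in_d_interval in Hd.
  replace (root_lo 3) with (3/8) by (unfold root_lo; simpl; lra).
  split_at_dec (37/96); [gap_piece 3%nat 0.178691788664 1.0256 0.358592|].
  split_at_dec (19/48); [gap_piece 3%nat 0.191719472247 1.1004 0.332752|].
  split_at_dec (13/32); [gap_piece 3%nat 0.205543300772 1.1798 0.307359|].
  split_at_dec (5/12); [gap_piece 3%nat 0.220223840695 1.264 0.282545|].
  split_at_dec (41/96); [gap_piece 3%nat 0.235828709891 1.3536 0.258338|].
  split_at_dec (7/16); [gap_piece 3%nat 0.252433642063 1.4489 0.234865|].
  split_at_dec (43/96); [gap_piece 3%nat 0.270123757044 1.5505 0.212187|].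
  split_at_dec (11/24); [gap_piece 3%nat 0.288995086073 1.6588 0.190423|].
  split_at_dec (15/32); [gap_piece 3%nat 0.309156415342 1.7745 0.169636|].
  split_at_dec (23/48); [gap_piece 3%nat 0.33073153008 1.8983 0.149905|].
  split_at_dec (47/96); [gap_piece 3%nat 0.353861821874 2.0311 0.131289|].
  gap_piece 3%nat 0.378710304355 2.1737 0.113871.
Qed.

Lemma root_lo_lt_Psi_lbd_3 : root_lo 3 < Psi 3 (d_lbd 3) (root_lo 3).
Proof. apply (lt_Psi_of_ln 3 ltac:(lia) _ (d_lbd 3)); solve [lra | interval_lra]. Qed.

Lemma Phi_lbd_certificate_3 :
  holds_above_subsolution 3 (d_lbd 3) (fun x => Phi 3 (d_lbd 3) x > 0).
Proof.
  apply (Phi_pos_above_subsolution 3 _ (893/2000)).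
  - interval_lra.
  - subsolution_at 3%nat (d_lbd 3).
  - Phi_pos_at 3%nat (d_lbd 3) (d_lbd 3).
  - split_at_inc (1393/3000); [increasing_piece 3%nat|].
    split_at_inc (2893/6000); [increasing_piece 3%nat|].
    increasing_piece 3%nat.
Qed.

Lemma Phi_ubd_certificate_3 :
  holds_above_subsolution 3 (d_ubd 3) (fun x => Phi 3 (d_ubd 3) x < 0).
Proof.
  apply (Phi_neg_above_subsolution 3 _ (1857/4000)).
  - interval_lra.
  - subsolution_at 3%nat (d_ubd 3).
  - Phi_neg_at 3%nat (d_ubd 3) (d_ubd 3).
  - split_at_inc (3857/8000); [increasing_piece 3%nat|].
    increasing_piece 3%nat.
Qed.

Lemma root_lo_lt_Psi_lbd_4 : root_lo 4 < Psi 4 (d_lbd 4) (root_lo 4).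
Proof. apply (lt_Psi_of_ln 4 ltac:(lia) _ (d_lbd 4)); solve [lra | interval_lra]. Qed.

Lemma gap_decreasing_4 : Psi_gap_decreasing 4.
Proof.
  intros d Hd. unfold in_d_interval in Hd.
  replace (root_lo 4) with (7/16) by (unfold root_lo; simpl; lra).
  split_at_dec (11/24); [gap_piece 4%nat 0.095843228857 1.5047 0.222125|].
  split_at_dec (23/48); [gap_piece 4%nat 0.112653335082 1.7686 0.170639|].
  gap_piece 4%nat 0.131952031591 2.0716 0.126086.
Qed.

Lemma Phi_lbd_certificate_4 :
  holds_above_subsolution 4 (d_lbd 4) (fun x => Phi 4 (d_lbd 4) x > 0).
Proof.
  pose proof root_lo_lt_Psi_lbd_4.
  replace (root_lo 4) with (7/16) in * by (unfold root_lo; simpl; lra).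
  apply (Phi_pos_above_subsolution 4 _ (7/16)).
  - interval_lra.
  - lra.
  - Phi_pos_at 4%nat (d_lbd 4) (d_lbd 4).
  - split_at_inc (85/192); [increasing_piece 4%nat|].
    split_at_inc (43/96); [increasing_piece 4%nat|].
    split_at_inc (29/64); [increasing_piece 4%nat|].
    split_at_inc (11/24); [increasing_piece 4%nat|].
    split_at_inc (89/192); [increasing_piece 4%nat|].
    split_at_inc (15/32); [increasing_piece 4%nat|].
    split_at_inc (91/192); [increasing_piece 4%nat|].
    split_at_inc (23/48); [increasing_piece 4%nat|].
    split_at_inc (31/64); [increasing_piece 4%nat|].
    split_at_inc (47/96); [increasing_piece 4%nat|].
    split_at_inc (95/192); [increasing_piece 4%nat|].
    increasing_piece 4%nat.
Qed.

Lemma Phi_ubd_certificate_4 :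
  holds_above_subsolution 4 (d_ubd 4) (fun x => Phi 4 (d_ubd 4) x < 0).
Proof.
  apply (Phi_neg_above_subsolution 4 _ (24081/50000)).
  - interval_lra.
  - subsolution_at 4%nat (32 * 0.693147).
  - Phi_neg_at 4%nat (32 * 0.693147) (32 * 0.6931472).
  - split_at_inc (49081/100000); [increasing_piece 4%nat|].
    increasing_piece 4%nat.
Qed.

Lemma root_lo_lt_Psi_lbd_5 : root_lo 5 < Psi 5 (d_lbd 5) (root_lo 5).
Proof. apply (lt_Psi_of_ln 5 ltac:(lia) _ (70 * 0.693147)); solve [lra | interval_lra]. Qed.

Lemma gap_decreasing_5 : Psi_gap_decreasing 5.
Proof.
  intros d Hd. unfold in_d_interval in Hd.
  replace (root_lo 5) with (15/32) by (unfold root_lo; simpl; lra).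
  gap_piece 5%nat 0.052060897978 2.4739 0.084409.
Qed.

Lemma Phi_lbd_certificate_5 :
  holds_above_subsolution 5 (d_lbd 5) (fun x => Phi 5 (d_lbd 5) x > 0).
Proof.
  apply (Phi_pos_above_subsolution 5 _ (97/200)).
  - interval_lra.
  - subsolution_at 5%nat (70 * 0.693147).
  - Phi_pos_at 5%nat (70 * 0.693147) (70 * 0.6931472).
  - split_at_inc (49/100); [increasing_piece 5%nat|].
    split_at_inc (99/200); [increasing_piece 5%nat|].
    increasing_piece 5%nat.
Qed.

Lemma Phi_ubd_certificate_5 :
  holds_above_subsolution 5 (d_ubd 5) (fun x => Phi 5 (d_ubd 5) x < 0).
Proof.
  apply (Phi_neg_above_subsolution 5 _ (97/200)).
  - interval_lra.
  - subsolution_at 5%nat (80 * 0.693147).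
  - Phi_neg_at 5%nat (80 * 0.693147) (80 * 0.6931472).
  - split_at_inc (49/100); [increasing_piece 5%nat|].
    split_at_inc (99/200); [increasing_piece 5%nat|].
    increasing_piece 5%nat.
Qed.

Theorem proposition1p7 (k : nat) (hk : (3 <= k)%nat) :
  (forall d : R, in_d_interval k d ->
     exists! x : R, in_root_interval k x /\ Psi k d x = x) /\
  (forall xs : R -> R,
     (forall d : R, in_d_interval k d ->
        in_root_interval k (xs d) /\ Psi k d (xs d) = xs d) ->
     (forall d0 : R, in_d_interval k d0 ->
        limit1_in (fun d => Phi k d (xs d)) (in_d_interval k)
                  (Phi k d0 (xs d0)) d0) /\
     Phi k (d_lbd k) (xs (d_lbd k)) > 0 /\
     Phi k (d_ubd k) (xs (d_ubd k)) < 0).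
Proof.
  assert ((6 <= k)%nat \/ (k < 6)%nat) as [Hk6|Hk6] by lia.
  - pose proof (d_lbd_ge_100 k Hk6).
    apply fixed_point_properties; auto; [lra|..].
    + exact (d_lbd_le_ubd_large k Hk6).
    + exact (root_lo_lt_Psi_lbd_large k Hk6).
    + exact (gap_decreasing_large k Hk6).
    + exact (Phi_lbd_certificate_large k Hk6).
    + exact (Phi_ubd_certificate_large k Hk6).
  - assert (k = 3 \/ k = 4 \/ k = 5)%nat as [-> | [-> | ->]] by lia;
      (apply fixed_point_properties; [lia|interval_lra|interval_lra|..]).
    + exact root_lo_lt_Psi_lbd_3.
    + exact gap_decreasing_3.
    + exact Phi_lbd_certificate_3.
    + exact Phi_ubd_certificate_3.
    + exact root_lo_lt_Psi_lbd_4.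
    + exact gap_decreasing_4.
    + exact Phi_lbd_certificate_4.
    + exact Phi_ubd_certificate_4.
    + exact root_lo_lt_Psi_lbd_5.
    + exact gap_decreasing_5.
    + exact Phi_lbd_certificate_5.
    + exact Phi_ubd_certificate_5.
Qed.
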